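(* Let $0<\epsilon<0.5$ and $r<1$. Let $\gamma_k=\frac{\gamma_0}{(k+1)^{0.5+0.5\epsilon}}$ and $\lambda_k=\frac{\lambda_0}{(k+1)^{0.5-\epsilon}}$ for $k\ge0$, with $\gamma_0,\lambda_0>0$ and $\gamma_0\lambda_0\mu_h\le 2m$. Let $\{\bar x_N\}$ be generated by the IR-IG method with these sequences and averaging parameter $r$. Then (a) $\bar x_N\to x_h^*$ as $N\to\infty$; (b) $f(\bar x_N)-f^*=\mathcal{O}\big(1/N^{0.5-\epsilon}\big)$.
   Context: Standing setup: $X\subset\mathbb{R}^n$ is nonempty, compact and convex. $f_1,\dots,f_m:\mathbb{R}^n\to\mathbb{R}$ are convex (possibly nondifferentiable) functions and $f=\sum_{i=1}^m f_i$. $h:\mathbb{R}^n\to\mathbb{R}$ is strongly convex with parameter $\mu_h>0$ (possibly nondifferentiable). Let $f^*=\min_{x\in X}f(x)$, $X^*=\arg\min_{x\in X}f(x)$, and let $x_h^*$ be the unique minimizer of $h$ over $X^*$. $\mathcal{P}_X$ denotes Euclidean projection onto $X$. IR-IG method: given $x_0\in X$, positive sequences $\{\gamma_k\}$, $\{\lambda_k\}$ and a constant $r<1$, for each $k\ge0$ set $x_{k,0}=x_k$; for $i=0,\dots,m-1$ pick any $g_{f_{i+1}}(x_{k,i})\in\partial f_{i+1}(x_{k,i})$ and $g_h(x_{k,i})\in\partial h(x_{k,i})$ and set $x_{k,i+1}=\mathcal{P}_X\big(x_{k,i}-\gamma_k\big(g_{f_{i+1}}(x_{k,i})+\tfrac{\lambda_k}{m}g_h(x_{k,i})\big)\big)$;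 then set $x_{k+1}=x_{k,m}$. The averaged iterates are $\bar x_N=\sum_{k=0}^{N-1}\gamma_k^r x_k\big/\sum_{k=0}^{N-1}\gamma_k^r$ for $N\ge1$. *)

From Stdlib Require Import Reals.
From mathcomp Require Import ssreflect ssrfun ssrbool eqtype ssrnat seq fintype bigop.

Set Implicit Arguments.
Unset Strict Implicit.

Local Open Scope R_scope.

Definition Vec (n : nat) := 'I_n -> R.

Definition vadd {n} (u v : Vec n) : Vec n := fun i => u i + v i.
Definition vsub {n} (u v : Vec n) : Vec n := fun i => u i - v i.
Definition vscale {n} (a : R) (u : Vec n) : Vec n := fun i => a * u i.
Definition dot {n} (u v : Vec n) : R := \big[Rplus/0]_(i < n) (u i * v i).
Definition vnorm {n} (u : Vec n) : R := sqrt (dot u u).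

Definition vsum {n} (N : nat) (F : nat -> Vec n) : Vec n :=
  fun i => \big[Rplus/0]_(0 <= k < N) (F k i).

Definition convex_set {n} (X : Vec n -> Prop) : Prop :=
  forall x y t, X x -> X y -> 0 <= t <= 1 ->
    X (vadd (vscale t x) (vscale (1 - t) y)).

(* X is compact (in R^n: closed and bounded, Heine-Borel) *)
Definition closed_set {n} (X : Vec n -> Prop) : Prop :=
  forall (u : nat -> Vec n) (x : Vec n),
    (forall k, X (u k)) -> Un_cv (fun k => vnorm (vsub (u k) x)) 0 -> X x.
Definition bounded_set {n} (X : Vec n -> Prop) : Prop :=
  exists M, forall x, X x -> vnorm x <= M.
Definition compact_set {n} (X : Vec n -> Prop) : Prop :=
  closed_set X /\ bounded_set X.

Definition convex_fun {n} (f : Vec n -> R) : Prop :=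
  forall x y t, 0 <= t <= 1 ->
    f (vadd (vscale t x) (vscale (1 - t) y)) <= t * f x + (1 - t) * f y.

Definition strongly_convex {n} (h : Vec n -> R) (mu : R) : Prop :=
  forall x y t, 0 <= t <= 1 ->
    h (vadd (vscale t x) (vscale (1 - t) y))
      <= t * h x + (1 - t) * h y - mu / 2 * t * (1 - t) * (vnorm (vsub x y))^2.

Definition subgrad {n} (f : Vec n -> R) (x g : Vec n) : Prop :=
  forall y, f y >= f x + dot g (vsub y x).

Definition is_proj {n} (X : Vec n -> Prop) (z p : Vec n) : Prop :=
  X p /\ forall y, X y -> vnorm (vsub z p) <= vnorm (vsub z y).

(* f = f_1 + ... + f_m, with f_{i+1} = fs i *)
Definition fsum {n} (m : nat) (fs : nat -> Vec n -> R) (x : Vec n) : R :=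
  \big[Rplus/0]_(0 <= i < m) fs i x.

Definition is_argmin {n} (X : Vec n -> Prop) (f : Vec n -> R) (x : Vec n) : Prop :=
  X x /\ forall y, X y -> f x <= f y.

Definition is_xh {n} (X : Vec n -> Prop) (f h : Vec n -> R) (x : Vec n) : Prop :=
  is_argmin X f x /\ forall y, is_argmin X f y -> h x <= h y.

(* IR-IG method: x k i stands for x_{k,i}; x_k = x k 0.  Each inner step uses
   some (arbitrary) subgradients of f_{i+1} and h at x_{k,i}. *)
Definition IRIG_run {n} (m : nat) (X : Vec n -> Prop) (fs : nat -> Vec n -> R)
    (h : Vec n -> R) (gam lam : nat -> R) (x : nat -> nat -> Vec n) : Prop :=
  X (x 0%nat 0%nat) /\
  (forall k, x (S k) 0%nat = x k m) /\
  (forall k i, (i < m)%nat ->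
     exists gf gh, subgrad (fs i) (x k i) gf /\ subgrad h (x k i) gh /\
       is_proj X
         (vsub (x k i) (vscale (gam k) (vadd gf (vscale (lam k / INR m) gh))))
         (x k (S i))).

Definition xbar {n} (gam : nat -> R) (r : R) (x : nat -> nat -> Vec n) (N : nat) : Vec n :=
  vscale (/ (\big[Rplus/0]_(0 <= k < N) Rpower (gam k) r))
         (vsum N (fun k => vscale (Rpower (gam k) r) (x k 0%nat))).

Definition gam_seq (gam0 eps : R) (k : nat) : R :=
  gam0 / Rpower (INR (S k)) ((1 / 2) + eps / 2).
Definition lam_seq (lam0 eps : R) (k : nat) : R :=
  lam0 / Rpower (INR (S k)) ((1 / 2) - eps).

(* One pass of IR-IG over f_1, ..., f_m is, up to O(gam_k^2) errors, a projected subgradient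
   step on f + lam_k h; the errors are controlled because convex functions are Lipschitz with
   bounded subgradients on the bounded set X.  Hence, with D_k = |x_k - xh|^2,
     D_{k+1} <= D_k - 2 gam_k (f(x_k) - f* + lam_k (h(x_k) - h(xh))) + O(gam_k^2).
   Multiplying by gam_k^r / gam_k (resp. gam_k^r / (gam_k lam_k)), both nondecreasing in k,
   and summing by parts bounds the gam^r-weighted averages of f(x_k) - f* by O(N^-(1/2-eps)),
   and those of h(x_k) - h(xh) by a vanishing quantity; by Jensen the same holds at xbar_N.
   Finally every cluster point of xbar_N minimises f on X with h no larger than at xh, so it
   is xh by strong convexity, and compactness of X gives convergence. *)

From HB Require Import structures.
From Pilot Require Import Defs.
From Stdlib Require Import Reals Lra Lia FunctionalExtensionality ClassicalEpsilon Classical.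
From Stdlib Require Rtopology.
From mathcomp Require Import ssreflect ssrfun ssrbool eqtype ssrnat seq fintype bigop.
From mathcomp Require Import zify.

Local Open Scope R_scope.

(** * Euclidean geometry of [Vec n] *)

Lemma RplusA : associative Rplus. Proof. by move=> a b c; ring. Qed.
HB.instance Definition _ := Monoid.isComLaw.Build R 0 Rplus RplusA Rplus_comm Rplus_0_l.

Section RealSums.
Context {I : Type}.
Implicit Types (s : seq I) (F G : I -> R).

Lemma sumR_scale s c F :
  \big[Rplus/0]_(i <- s) (c * F i) = c * \big[Rplus/0]_(i <- s) F i.
Proof. by elim: s => [|a s IH]; rewrite ?big_nil ?big_cons ?IH; ring. Qed.

Lemma sumR_le {s F G} :
  (forall i, F i <= G i) -> \big[Rplus/0]_(i <- s) F i <= \big[Rplus/0]_(i <- s) G i.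
Proof. by move=> H; elim/big_ind2: _ => // [|a b c d]; [lra | have := H; lra]. Qed.

Lemma sumR_ge0 s {F} : (forall i, 0 <= F i) -> 0 <= \big[Rplus/0]_(i <- s) F i.
Proof. by move=> H; elim/big_ind: _ => // [|a b]; [lra | have := H; lra]. Qed.

End RealSums.

Lemma sumR_term_le {I : eqType} {s : seq I} {F : I -> R} {i} :
  (forall j, 0 <= F j) -> i \in s -> F i <= \big[Rplus/0]_(j <- s) F j.
Proof.
move=> H; elim: s => [|a s IH] //; rewrite in_cons big_cons => /orP [/eqP ->|Hi].
- have := sumR_ge0 s H; lra.
- have := IH Hi; have := H a; lra.
Qed.

Lemma sumR_eq0_in {I : eqType} {s : seq I} {F : I -> R} :
  (forall i, 0 <= F i) -> \big[Rplus/0]_(j <- s) F j = 0 -> forall i, i \in s -> F i = 0.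
Proof. by move=> H H0 i Hi; have := sumR_term_le H Hi; have := H i; lra. Qed.

Lemma le0_of_le_scaled (a c : R) : 0 <= c -> (forall t, 0 < t -> a <= t * c) -> a <= 0.
Proof.
move=> Hc H; apply: Rnot_lt_le => Ha.
have Hp : 0 < / (2 * (c + 1)) by apply: Rinv_0_lt_compat; lra.
have := H (a * / (2 * (c + 1))) ltac:(nra).
have : a * / (2 * (c + 1)) * (2 * (c + 1)) = a by field; lra.
nra.
Qed.

Section Vectors.
Context {n : nat}.
Implicit Types (u v w a b c : Vec n).

Definition sqnorm (u : Vec n) : R := dot u u.
Definition vzero : Vec n := fun _ => 0.

Lemma vext u v : (forall i, u i = v i) -> u = v.
Proof. by move=> H; apply: functional_extensionality. Qed.

Lemma dotC u v : dot u v = dot v u.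
Proof. by apply: eq_bigr => i _; rewrite Rmult_comm. Qed.

Lemma dotDl u v w : dot (vadd u v) w = dot u w + dot v w.
Proof. by rewrite /dot -big_split; apply: eq_bigr => i _; rewrite /vadd Rmult_plus_distr_r. Qed.

Lemma dotZl t u w : dot (vscale t u) w = t * dot u w.
Proof. by rewrite /dot -sumR_scale; apply: eq_bigr => i _; rewrite /vscale; ring. Qed.

Lemma dotBl u v w : dot (vsub u v) w = dot u w - dot v w.
Proof.
have -> : vsub u v = vadd u (vscale (-1) v) by apply: vext => i; rewrite /vsub /vadd /vscale; ring.
by rewrite dotDl dotZl; ring.
Qed.

Lemma dotDr u v w : dot w (vadd u v) = dot w u + dot w v.
Proof. by rewrite dotC dotDl !(dotC w). Qed.

Lemma dotBr u v w : dot w (vsub u v) = dot w u - dot w v.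
Proof. by rewrite dotC dotBl !(dotC w). Qed.

Lemma dotZr t u w : dot w (vscale t u) = t * dot w u.
Proof. by rewrite dotC dotZl (dotC w). Qed.

Lemma sqnorm_ge0 u : 0 <= sqnorm u.
Proof. by apply: sumR_ge0 => i; apply: Rle_0_sqr. Qed.

Lemma vnorm_ge0 u : 0 <= vnorm u.
Proof. exact: sqrt_pos. Qed.

Lemma vnorm_sq u : vnorm u * vnorm u = sqnorm u.
Proof. by rewrite /vnorm sqrt_sqrt //; apply: sqnorm_ge0. Qed.

Lemma vnorm_le_of_sqnorm u v : sqnorm u <= sqnorm v -> vnorm u <= vnorm v.
Proof. exact: sqrt_le_1_alt. Qed.

Lemma sqnorm_le_of_vnorm u v : vnorm u <= vnorm v -> sqnorm u <= sqnorm v.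
Proof. by move=> H; rewrite -!vnorm_sq; have := vnorm_ge0 u; nra. Qed.

Lemma vnorm_le_bound u (c : R) : 0 <= c -> sqnorm u <= c * c -> vnorm u <= c.
Proof. by move=> Hc H; rewrite /vnorm -(sqrt_square c) //; apply: sqrt_le_1_alt. Qed.

Lemma sqnorm_vsub a b : sqnorm (vsub a b) = sqnorm a - 2 * dot a b + sqnorm b.
Proof. by rewrite /sqnorm !dotBl !dotBr (dotC b a); ring. Qed.

Lemma sqnorm_vsubZ a b t :
  sqnorm (vsub a (vscale t b)) = sqnorm a - 2 * t * dot a b + t * t * sqnorm b.
Proof. by rewrite /sqnorm !dotBl !dotBr !dotZl !dotZr (dotC b a); ring. Qed.

(* Expand [0 <= |t u - v|^2] and optimise over [t > 0]. *)
Lemma cauchy_schwarz u v : dot u v <= vnorm u * vnorm v.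
Proof.
have key t : 0 < t -> 2 * dot u v <= t * sqnorm u + / t * sqnorm v.
  move=> Ht; have := sqnorm_ge0 (vsub (vscale t u) v).
  rewrite sqnorm_vsub /sqnorm !dotZl !dotZr => H.
  have Hi : 0 < / t by apply: Rinv_0_lt_compat.
  have E : / t * (t * (t * dot u u) - 2 * (t * dot u v) + dot v v) =
           t * dot u u - 2 * dot u v + / t * dot v v by field; lra.
  have := Rmult_le_pos _ _ (Rlt_le _ _ Hi) H; lra.
have Hu := vnorm_ge0 u; have Hv := vnorm_ge0 v.
have Eu := vnorm_sq u; have Ev := vnorm_sq v.
have [Hu0|Hu0] := Req_dec (vnorm u) 0.
  rewrite Hu0 Rmult_0_l; apply: (le0_of_le_scaled _ _ (sqnorm_ge0 v)) => t Ht.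
  have Ht' : 0 < / (2 * t) by apply: Rinv_0_lt_compat; lra.
  have := key _ Ht'; rewrite Rinv_inv -Eu Hu0 !Rmult_0_r; lra.
have [Hv0|Hv0] := Req_dec (vnorm v) 0.
  rewrite Hv0 Rmult_0_r; apply: (le0_of_le_scaled _ _ (sqnorm_ge0 u)) => t Ht.
  have := key (t / 2) ltac:(lra); rewrite -Ev Hv0 !Rmult_0_r; nra.
have := key (vnorm v / vnorm u) ltac:(apply: Rdiv_lt_0_compat; lra).
have -> : vnorm v / vnorm u * sqnorm u + / (vnorm v / vnorm u) * sqnorm v
  = 2 * (vnorm u * vnorm v) by rewrite -Eu -Ev; field; lra.
lra.
Qed.

Lemma vnorm_triangle u v : vnorm (vadd u v) <= vnorm u + vnorm v.
Proof.
apply: vnorm_le_bound; first by have := vnorm_ge0 u; have := vnorm_ge0 v; lra.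
rewrite /sqnorm dotDl !dotDr (dotC v u).
have Eu := vnorm_sq u; have Ev := vnorm_sq v; rewrite /sqnorm in Eu Ev.
have := cauchy_schwarz u v; nra.
Qed.

Lemma vnormZ t u : vnorm (vscale t u) = Rabs t * vnorm u.
Proof.
rewrite /vnorm dotZl dotZr -Rmult_assoc sqrt_mult; [|nra|exact: sqnorm_ge0].
by rewrite -(sqrt_Rsqr_abs t).
Qed.

Lemma vnorm_vsub_triangle a b c : vnorm (vsub a c) <= vnorm (vsub a b) + vnorm (vsub b c).
Proof.
have -> : vsub a c = vadd (vsub a b) (vsub b c) by apply: vext => i; rewrite /vsub /vadd; ring.
exact: vnorm_triangle.
Qed.

Lemma vnorm_vsubC a b : vnorm (vsub a b) = vnorm (vsub b a).
Proof.
have -> : vsub a b = vscale (-1) (vsub b a) by apply: vext => i; rewrite /vsub /vscale; ring.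
by rewrite vnormZ Rabs_Ropp Rabs_R1 Rmult_1_l.
Qed.

Lemma vnorm_vsub_le a b : vnorm (vsub a b) <= vnorm a + vnorm b.
Proof.
have -> : vsub a b = vadd a (vscale (-1) b) by apply: vext => i; rewrite /vsub /vadd /vscale; ring.
by apply: Rle_trans (vnorm_triangle _ _) _; rewrite vnormZ Rabs_Ropp Rabs_R1; lra.
Qed.

Lemma vnorm_vzero : vnorm vzero = 0.
Proof.
rewrite /vnorm /dot big1 ?sqrt_0 // => i _; rewrite /vzero; ring.
Qed.

Lemma vnorm_eq0 v : vnorm v = 0 -> v = vzero.
Proof.
move=> H; have Hs : sqnorm v = 0 by rewrite -vnorm_sq H; ring.
apply: vext => i; rewrite /vzero.
have := sumR_eq0_in (fun j => Rle_0_sqr (v j)) Hs i (mem_index_enum i); rewrite /Rsqr => E; nra.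
Qed.

Lemma coord_le_vnorm v i : Rabs (v i) <= vnorm v.
Proof.
rewrite -(sqrt_Rsqr_abs (v i)); apply: sqrt_le_1_alt; rewrite /Rsqr.
exact: (sumR_term_le (fun j => Rle_0_sqr (v j)) (mem_index_enum i)).
Qed.

(* The variational inequality [<z - p, y - p> <= 0] characterising the projection. *)
Lemma proj_closer {X : Vec n -> Prop} {z p y} :
  convex_set X -> is_proj X z p -> X y -> vnorm (vsub p y) <= vnorm (vsub z y).
Proof.
move=> HX [Xp Hp] Xy.
set a := vsub z p; set b := vsub y p.
have Hab : dot a b <= 0.
  have key t : 0 < t <= 1 -> 2 * dot a b <= t * sqnorm b.
    move=> Ht; have := sqnorm_le_of_vnorm _ _ (Hp _ (HX y p t Xy Xp ltac:(lra))).
    have -> : vsub z (vadd (vscale t y) (vscale (1 - t) p)) = vsub a (vscale t b)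
      by apply: vext => i; rewrite /a /b /vsub /vadd /vscale; ring.
    rewrite sqnorm_vsubZ => H.
    apply: (Rmult_le_reg_l t); first lra.
    rewrite -/a in H.
    have -> : t * (2 * dot a b) = 2 * t * dot a b by ring.
    have -> : t * (t * sqnorm b) = t * t * sqnorm b by ring.
    lra.
  apply: (le0_of_le_scaled _ _ (sqnorm_ge0 b)) => t Ht.
  have Hb := sqnorm_ge0 b.
  have [Ht1|Ht1] := Rle_or_lt t 1; [have := key t | have := key 1]; move/(_ ltac:(lra)); nra.
rewrite vnorm_vsubC (vnorm_vsubC z y); apply: vnorm_le_of_sqnorm.
have -> : vsub y z = vsub b a by apply: vext => i; rewrite /a /b /vsub; ring.
by rewrite -/b sqnorm_vsub (dotC b a); have := sqnorm_ge0 a; lra.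
Qed.

End Vectors.

(** * Weighted averages and convex functions *)

Section WeightedAverage.
Context {n : nat} {I : eqType}.

Definition wavg (s : seq I) (a : I -> R) (p : I -> Vec n) : Vec n :=
  vscale (/ \big[Rplus/0]_(i <- s) a i) (fun j => \big[Rplus/0]_(i <- s) (a i * p i j)).

Definition wavgR (s : seq I) (a c : I -> R) : R :=
  (/ \big[Rplus/0]_(i <- s) a i) * \big[Rplus/0]_(i <- s) (a i * c i).

(* Induction on [s]: the first point enters with relative weight [a i / (a i + S)]. *)
Lemma wavg_ind (Q : Vec n -> R -> Prop) :
  (forall x y c d t, Q x c -> Q y d -> 0 <= t <= 1 ->
     Q (vadd (vscale t x) (vscale (1 - t) y)) (t * c + (1 - t) * d)) ->
  forall s a p c, (forall i, 0 <= a i) -> (forall i, Q (p i) (c i)) ->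
  0 < \big[Rplus/0]_(i <- s) a i -> Q (wavg s a p) (wavgR s a c).
Proof.
rewrite /wavg /wavgR => Hmix; elim=> [|i s IH] a p c Ha HQ; rewrite ?big_nil; first lra.
rewrite !big_cons => Hpos.
have Hai := Ha i; have HS' := sumR_ge0 s Ha.
have [HS0|HS0] := Req_dec (\big[Rplus/0]_(j <- s) a j) 0.
- have Hz := sumR_eq0_in Ha HS0.
  have -> : \big[Rplus/0]_(j <- s) (a j * c j) = 0
    by rewrite big_seq big1 // => j Hj; rewrite Hz //; ring.
  have -> : vscale (/ (a i + \big[Rplus/0]_(j <- s) a j))
      (fun k => \big[Rplus/0]_(j <- i :: s) (a j * p j k)) = p i.
    apply: vext => k; rewrite /vscale big_cons HS0 big_seq big1 => [|j Hj]; last by rewrite Hz //; ring.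
    by field; lra.
  by rewrite HS0 (_ : / (a i + 0) * (a i * c i + 0) = c i) //; field; lra.
- have HSp : 0 < \big[Rplus/0]_(j <- s) a j by lra.
  have IH' := IH a p c Ha HQ HSp.
  set S := \big[Rplus/0]_(j <- s) a j in HS0 HSp IH' *.
  set t := a i / (a i + S).
  have Ht : 0 <= t <= 1.
    rewrite /t; split; first by apply: Rmult_le_pos; [lra | apply: Rlt_le; apply: Rinv_0_lt_compat; lra].
    by apply: (Rmult_le_reg_r (a i + S)); [lra | rewrite /Rdiv Rmult_assoc Rinv_l; lra].
  have -> : vscale (/ (a i + S)) (fun k => \big[Rplus/0]_(j <- i :: s) (a j * p j k)) =
      vadd (vscale t (p i)) (vscale (1 - t) (vscale (/ S) (fun k => \big[Rplus/0]_(j <- s) (a j * p j k)))).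
    by apply: vext => k; rewrite /vscale /vadd /t big_cons; field; lra.
  have -> : / (a i + S) * (a i * c i + \big[Rplus/0]_(j <- s) (a j * c j)) =
      t * c i + (1 - t) * (/ S * \big[Rplus/0]_(j <- s) (a j * c j)) by rewrite /t; field; lra.
  exact: Hmix (HQ i) IH' Ht.
Qed.

Lemma convex_set_wavg (X : Vec n -> Prop) s a p :
  convex_set X -> (forall i, 0 <= a i) -> (forall i, X (p i)) ->
  0 < \big[Rplus/0]_(i <- s) a i -> X (wavg s a p).
Proof.
move=> HX Ha Hp Hs.
by apply: (wavg_ind (fun v _ => X v)) (fun _ => 0) _ _ Hs => // x y *; apply: HX.
Qed.

Lemma convex_fun_wavg (f : Vec n -> R) s a p :
  convex_fun f -> (forall i, 0 <= a i) -> 0 < \big[Rplus/0]_(i <- s) a i ->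
  f (wavg s a p) <= wavgR s a (fun i => f (p i)).
Proof.
move=> Hf Ha Hs; apply: (wavg_ind (fun v c => f v <= c)) => // [x y c d t Hx Hy Ht|i].
- by apply: Rle_trans (Hf x y t Ht) _; nra.
- exact: Rle_refl.
Qed.

Lemma wavgR_shift (s : seq I) (w A : I -> R) c :
  0 < \big[Rplus/0]_(k <- s) w k ->
  wavgR s w A - c = wavgR s w (fun k => A k - c).
Proof.
rewrite /wavgR => HW.
have -> : \big[Rplus/0]_(k <- s) (w k * (A k - c)) =
    \big[Rplus/0]_(k <- s) (w k * A k) + - c * \big[Rplus/0]_(k <- s) w k.
  by rewrite -sumR_scale -big_split; apply: eq_bigr => k _ /=; ring.
by field; lra.
Qed.

End WeightedAverage.

Lemma convex_segment_bound {n} (f : Vec n -> R) (e : Vec n) T t :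
  convex_fun f -> 0 < T -> -T <= t <= T ->
  f (vscale t e) <= Rabs (f (vscale T e)) + Rabs (f (vscale (-T) e)).
Proof.
move=> convex_f HT Ht; set l := (t + T) / (2 * T).
have Hl : 0 <= l <= 1.
  rewrite /l; split; first by apply: Rmult_le_pos; [lra | apply: Rlt_le; apply: Rinv_0_lt_compat; lra].
  by apply: (Rmult_le_reg_r (2 * T)); [lra | rewrite /Rdiv Rmult_assoc Rinv_l; lra].
have -> : vscale t e = vadd (vscale l (vscale T e)) (vscale (1 - l) (vscale (-T) e))
  by apply: vext => i; rewrite /vadd /vscale /l; field; lra.
apply: Rle_trans (convex_f _ _ _ Hl) _.
have := Rle_abs (f (vscale T e)); have := Rle_abs (f (vscale (-T) e)).
have := Rabs_pos (f (vscale T e)); have := Rabs_pos (f (vscale (-T) e)); nra.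
Qed.

(* A point of the ball of radius K is the average of the n points [n v_i e_i], each on
   a segment [-T e_i, T e_i] of the coordinate axes. *)
Lemma convex_bounded_above {n} (g : Vec n -> R) K :
  convex_fun g -> exists U, forall v, vnorm v <= K -> g v <= U.
Proof.
case: n g => [|n'] g Hg.
  exists (Rabs (g vzero)) => v _.
  by rewrite (_ : v = vzero); [apply: Rle_abs | apply: vext => -[]].
set N := INR n'.+1; set T := N * Rabs K + 1.
have HN : 0 < N by apply: lt_0_INR; lia.
have HT : 0 < T by have := Rabs_pos K; rewrite /T; nra.
set e := fun (i j : 'I_n'.+1) => if i == j then 1 else 0.
set c := fun i => Rabs (g (vscale T (e i))) + Rabs (g (vscale (-T) (e i))).
exists (wavgR (index_enum 'I_n'.+1) (fun _ => 1) c) => v Hv.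
have Hsum : \big[Rplus/0]_(i <- index_enum 'I_n'.+1) (fun _ => 1) i = N.
  rewrite big_const_ord /N; elim: n'.+1 => [|k IH] //=; rewrite IH.
  by case: k {IH} => [|k] /=; ring.
have -> : v = wavg (index_enum 'I_n'.+1) (fun _ => 1) (fun i => vscale (N * v i) (e i)).
  apply: vext => k; rewrite /wavg /vscale Hsum (bigD1 k) // big1 => [|i /negbTE Hik]; last first.
    by rewrite /e Hik; ring.
  by rewrite /e eqxx /=; field; lra.
have HN1 : 0 < \big[Rplus/0]_(i <- index_enum 'I_n'.+1) (fun _ => 1) i by rewrite Hsum.
apply: Rle_trans (convex_fun_wavg g (index_enum 'I_n'.+1) (fun _ => 1) (fun i => vscale (N * v i) (e i)) Hg (fun=> Rle_0_1) HN1) _.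
rewrite /wavgR; apply: Rmult_le_compat_l.
  by rewrite Hsum; apply: Rlt_le; apply: Rinv_0_lt_compat.
apply: sumR_le => i; apply: Rmult_le_compat_l; first lra.
apply: convex_segment_bound => //.
have := Rle_trans _ _ _ (coord_le_vnorm v i) Hv; have := Rle_abs K.
have := Rle_abs (v i); have := Rle_abs (- v i); rewrite Rabs_Ropp /T; split; nra.
Qed.

Section LocallyBounded.
Context {n : nat} (f : Vec n -> R) (Rb Lo U : R).
Hypothesis convex_f : convex_fun f.
Hypothesis bounded_f : forall v, vnorm v <= Rb + 1 -> Lo <= f v <= U.

(* Extend the segment [z, x] to length 1 beyond z and use convexity along it. *)
Lemma convex_lipschitz_ball x z : vnorm x <= Rb -> vnorm z <= Rb ->
  f x - f z <= (U - Lo) * vnorm (vsub x z).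
Proof.
move=> Hx Hz; set d := vnorm (vsub x z); have Hd : 0 <= d := vnorm_ge0 _.
have [Hd1|Hd1] := Rle_or_lt 1 d.
  by have := bounded_f x ltac:(lra); have := bounded_f z ltac:(lra); nra.
have [Hd0|Hd0] := Req_dec d 0.
  have Exz := vnorm_eq0 _ Hd0; have -> : x = z.
    by apply: vext => i; have := f_equal (fun v => v i) Exz; rewrite /vsub /vzero; lra.
  by rewrite -/d Hd0; lra.
set w := vadd z (vscale (/ d) (vsub x z)).
have Hw : vnorm w <= Rb + 1.
  apply: Rle_trans (vnorm_triangle _ _) _.
  rewrite vnormZ Rabs_right -/d ?Rinv_l; [lra | lra | apply: Rle_ge; apply: Rlt_le; apply: Rinv_0_lt_compat; lra].
have Ex : x = vadd (vscale d w) (vscale (1 - d) z)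
  by apply: vext => i; rewrite /w /vadd /vscale /vsub; field; lra.
have := convex_f w z d ltac:(lra); rewrite -Ex.
by have := bounded_f w Hw; have := bounded_f z ltac:(lra); rewrite -/d; nra.
Qed.

Lemma convex_subgrad_bounded x g : vnorm x <= Rb -> subgrad f x g -> vnorm g <= U - Lo.
Proof.
move=> Hx Hg; have Hng := vnorm_ge0 g.
have [Hg0|Hg0] := Req_dec (vnorm g) 0.
  by have := bounded_f x ltac:(lra); lra.
set y := vadd x (vscale (/ vnorm g) g).
have Hy : vnorm y <= Rb + 1.
  apply: Rle_trans (vnorm_triangle _ _) _.
  rewrite vnormZ Rabs_right ?Rinv_l; [lra | lra | apply: Rle_ge; apply: Rlt_le; apply: Rinv_0_lt_compat; lra].
have := Hg y.
have -> : vsub y x = vscale (/ vnorm g) g by apply: vext => i; rewrite /y /vsub /vadd /vscale; ring.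
rewrite dotZr -/(sqnorm g) -vnorm_sq (_ : / vnorm g * (vnorm g * vnorm g) = vnorm g); last by field.
by have := bounded_f y Hy; have := bounded_f x ltac:(lra); lra.
Qed.

End LocallyBounded.

Lemma convex_bounded_ball {n} (f : Vec n -> R) K :
  convex_fun f -> exists Lo U, forall v, vnorm v <= K -> Lo <= f v <= U.
Proof.
move=> convex_f; have [U HU] := convex_bounded_above f K convex_f.
exists (2 * f vzero - U), U => v Hv; split; last exact: HU.
have Hv' : vnorm (vscale (-1) v) <= K by rewrite vnormZ Rabs_Ropp Rabs_R1; lra.
have E : vzero = vadd (vscale (1/2) v) (vscale (1 - 1/2) (vscale (-1) v))
  by apply: vext => i; rewrite /vzero /vadd /vscale; field.
by have := convex_f v (vscale (-1) v) (1/2) ltac:(lra); rewrite -E; have := HU _ Hv'; have := HU _ Hv; lra.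
Qed.

Definition lipschitz_ball {n} (f : Vec n -> R) (Rb C : R) : Prop :=
  forall x z, vnorm x <= Rb -> vnorm z <= Rb -> f x - f z <= C * vnorm (vsub x z).

Definition subgrad_bounded_ball {n} (f : Vec n -> R) (Rb C : R) : Prop :=
  forall x g, vnorm x <= Rb -> subgrad f x g -> vnorm g <= C.

Definition regular_on_ball {n} (f : Vec n -> R) (Rb C : R) : Prop :=
  lipschitz_ball f Rb C /\ subgrad_bounded_ball f Rb C.

Lemma regular_on_ball_le {n} (f : Vec n -> R) Rb C C' :
  0 <= C -> C <= C' -> regular_on_ball f Rb C -> regular_on_ball f Rb C'.
Proof.
move=> HC HCC [Hl Hs]; split => [x z Hx Hz | x g Hx Hg].
- by have := Hl x z Hx Hz; have := vnorm_ge0 (vsub x z); nra.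
- by have := Hs x g Hx Hg; lra.
Qed.

Lemma convex_regular_on_ball {n} (f : Vec n -> R) Rb :
  convex_fun f -> 0 <= Rb -> exists C, 0 <= C /\ regular_on_ball f Rb C.
Proof.
move=> Hf HRb; have [Lo [U HB]] := convex_bounded_ball f (Rb + 1) Hf.
exists (U - Lo); split.
  by have := HB vzero; rewrite vnorm_vzero => /(_ ltac:(lra)); lra.
by split => [x z | x g]; [apply: convex_lipschitz_ball | apply: convex_subgrad_bounded].
Qed.

Lemma fsumS {n} m (fs : nat -> Vec n -> R) v : fsum m.+1 fs v = fsum m fs v + fs m v.
Proof. by rewrite /fsum big_nat_recr. Qed.

Lemma convex_fsum {n} m (fs : nat -> Vec n -> R) :
  (forall i, (i < m)%nat -> convex_fun (fs i)) -> convex_fun (fsum m fs).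
Proof.
elim: m => [|m IH] Hfs x y t Ht; first by rewrite /fsum !big_geq //; lra.
rewrite !fsumS; have := IH (fun i Hi => Hfs i ltac:(lia)) x y t Ht.
by have := Hfs m ltac:(lia) x y t Ht; lra.
Qed.

Lemma strongly_convex_convex {n} (h : Vec n -> R) mu :
  0 < mu -> strongly_convex h mu -> convex_fun h.
Proof.
move=> Hmu Hh x y t Ht; have := Hh x y t Ht; have := pow2_ge_0 (vnorm (vsub x y)).
have : 0 <= mu / 2 * t * (1 - t) by apply: Rmult_le_pos; [apply: Rmult_le_pos|]; lra.
nra.
Qed.

(** * Real powers of integers *)

Lemma exp_convex a b t : 0 <= t <= 1 -> exp (t * a + (1 - t) * b) <= t * exp a + (1 - t) * exp b.
Proof.
move=> Ht; set w := t * a + (1 - t) * b.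
have Ea : exp a = exp w * exp (a - w) by rewrite -exp_plus; congr exp; ring.
have Eb : exp b = exp w * exp (b - w) by rewrite -exp_plus; congr exp; ring.
have Ha := exp_ineq1_le (a - w); have Hb := exp_ineq1_le (b - w); have Hw := exp_pos w.
have E : t * (exp w * (1 + (a - w))) + (1 - t) * (exp w * (1 + (b - w))) = exp w
  by rewrite /w; ring.
have := Rmult_le_compat_l t _ _ (proj1 Ht) (Rmult_le_compat_l _ _ _ (Rlt_le _ _ Hw) Ha).
have := Rmult_le_compat_l (1 - t) _ _ ltac:(lra) (Rmult_le_compat_l _ _ _ (Rlt_le _ _ Hw) Hb).
rewrite Ea Eb; lra.
Qed.

Lemma Rpower_le_affine x t : 0 < x -> 0 <= t <= 1 -> Rpower x t <= t * x + (1 - t).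
Proof.
move=> Hx Ht; have := exp_convex (ln x) 0 t Ht.
by rewrite exp_ln // exp_0 Rmult_0_r Rplus_0_r Rmult_1_r.
Qed.

Lemma Rpower_ge_affine x t : 0 < x -> 1 <= t -> 1 + t * (x - 1) <= Rpower x t.
Proof.
move=> Hx Ht; set v := Rpower x t; have Hv : 0 < v := exp_pos _.
have E : Rpower v (/ t) = x by rewrite /v Rpower_mult Rinv_r ?Rpower_1 //; lra.
have Hit : 0 <= / t <= 1.
  split; first by apply: Rlt_le; apply: Rinv_0_lt_compat; lra.
  by rewrite -Rinv_1; apply: Rinv_le_contravar; lra.
have := Rpower_le_affine v (/ t) Hv Hit; rewrite E => H.
have : t * x <= t * (/ t * v + (1 - / t)) by apply: Rmult_le_compat_l; lra.
have -> : t * (/ t * v + (1 - / t)) = v + t - 1 by field; lra.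
lra.
Qed.

(* [npow s t] is [s ^ t] for a positive integer [s] (for [s = 0] it is the junk value [1]). *)
Definition npow (s : nat) (t : R) : R := Rpower (INR s) t.

Lemma npow_gt0 s t : 0 < npow s t.
Proof. exact: exp_pos. Qed.

Lemma npow1n t : npow 1 t = 1.
Proof. by rewrite /npow /Rpower /= ln_1 Rmult_0_r exp_0. Qed.

Lemma npowD s t1 t2 : npow s (t1 + t2) = npow s t1 * npow s t2.
Proof. exact: Rpower_plus. Qed.

Lemma npowN s t : npow s (- t) = / npow s t.
Proof. exact: Rpower_Ropp. Qed.

Lemma Rpower_inv x t : 0 < x -> Rpower (/ x) t = / Rpower x t.
Proof. by move=> Hx; rewrite /Rpower ln_Rinv // -exp_Ropp; congr exp; ring. Qed.

Lemma npowB s t1 t2 : npow s (t1 - t2) = npow s t1 / npow s t2.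
Proof. by rewrite /Rminus npowD npowN. Qed.

Lemma npowS_exp s t : (0 < s)%nat -> npow s (t + 1) = INR s * npow s t.
Proof. by move=> Hs; rewrite npowD /npow Rpower_1 1?Rmult_comm //; apply: lt_0_INR; lia. Qed.

Lemma npow0 s : (0 < s)%nat -> npow s 0 = 1.
Proof. by move=> Hs; apply: Rpower_O; apply: lt_0_INR; lia. Qed.

Lemma npow_le_base a b t : (0 < a)%nat -> (a <= b)%nat -> 0 <= t -> npow a t <= npow b t.
Proof. by move=> Ha Hab Ht; apply: Rle_Rpower_l => //; split; [apply: lt_0_INR | apply: le_INR]; lia. Qed.

Lemma npow_ge_base a b t : (0 < a)%nat -> (a <= b)%nat -> t <= 0 -> npow b t <= npow a t.
Proof.
move=> Ha Hab Ht; rewrite (_ : t = - - t); last ring.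
rewrite npowN (npowN a).
by apply: Rinv_le_contravar; [apply: npow_gt0 | apply: npow_le_base => //; lra].
Qed.

Lemma npow_le_exp s t1 t2 : (0 < s)%nat -> t1 <= t2 -> npow s t1 <= npow s t2.
Proof. by move=> Hs Ht; apply: Rle_Rpower => //; have := le_INR 1 s ltac:(lia); rewrite /=; lra. Qed.

Lemma npowS_le s t : (0 < s)%nat -> 0 <= t -> npow s.+1 t <= Rpower 2 t * npow s t.
Proof.
move=> Hs Ht; have Hs' : 0 < INR s by apply: lt_0_INR; lia.
apply: Rle_trans (Rle_Rpower_l (INR s.+1) (2 * INR s) t Ht _) _.
  by rewrite S_INR; have := le_INR 1 s ltac:(lia); rewrite /=; split; lra.
by rewrite /npow Rpower_mult_distr //; lra.
Qed.

Lemma npow_lt_eventually d eps : 0 < d -> 0 < eps ->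
  exists N0, (0 < N0)%nat /\ forall N, (N0 <= N)%nat -> npow N (- d) < eps.
Proof.
move=> Hd He; have [N0 HN0] := INR_unbounded (exp (- ln eps / d)).
exists N0.+1; split => [|N HN]; first lia.
have HN' : 0 < INR N by apply: lt_0_INR; lia.
have Hl : - ln eps / d < ln (INR N).
  rewrite -(ln_exp (- ln eps / d)); apply: ln_increasing; first exact: exp_pos.
  by have := le_INR N0 N ltac:(lia); lra.
rewrite /npow /Rpower -(exp_ln eps He); apply: exp_increasing.
have : d * (- ln eps / d) = - ln eps by field; lra.
by have := Rmult_lt_compat_l d _ _ Hd Hl; lra.
Qed.

Lemma npow_factor s p : (0 < s)%nat ->
  npow s p = Rpower (INR s / INR s.+1) p * (INR s.+1 * npow s.+1 (p - 1)).
Proof.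
move=> Hs; have Hs1 : 0 < INR s.+1 by apply: lt_0_INR; lia.
have Hs0 : 0 < INR s by apply: lt_0_INR; lia.
rewrite -npowS_exp // (_ : p - 1 + 1 = p); last ring.
rewrite /npow Rpower_mult_distr; [| by apply: Rdiv_lt_0_compat | by []].
by congr Rpower; field; lra.
Qed.

Lemma npowS_sub_le p s : 1 <= p -> (0 < s)%nat ->
  npow s.+1 p - npow s p <= p * npow s.+1 (p - 1).
Proof.
move=> Hp Hs; have Hs1 : 0 < INR s.+1 by apply: lt_0_INR; lia.
have Hr : 0 < INR s / INR s.+1 by apply: Rdiv_lt_0_compat => //; apply: lt_0_INR; lia.
have Hq := npow_gt0 s.+1 (p - 1).
have := Rmult_le_compat_r (INR s.+1 * npow s.+1 (p - 1)) _ _ ltac:(nra) (Rpower_ge_affine _ p Hr Hp).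
have -> : (1 + p * (INR s / INR s.+1 - 1)) * (INR s.+1 * npow s.+1 (p - 1)) =
  INR s.+1 * npow s.+1 (p - 1) - p * npow s.+1 (p - 1) by rewrite S_INR; field; rewrite -S_INR; lra.
have -> : npow s.+1 p = INR s.+1 * npow s.+1 (p - 1)
  by rewrite -npowS_exp // (_ : p - 1 + 1 = p); last ring.
rewrite (npow_factor s p) //; lra.
Qed.

Lemma npowS_sub_ge p s : 0 < p <= 1 -> (0 < s)%nat ->
  p * npow s.+1 (p - 1) <= npow s.+1 p - npow s p.
Proof.
move=> Hp Hs; have Hs1 : 0 < INR s.+1 by apply: lt_0_INR; lia.
have Hr : 0 < INR s / INR s.+1 by apply: Rdiv_lt_0_compat => //; apply: lt_0_INR; lia.
have Hq := npow_gt0 s.+1 (p - 1).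
have := Rmult_le_compat_r (INR s.+1 * npow s.+1 (p - 1)) _ _ ltac:(nra)
  (Rpower_le_affine _ p Hr (conj (Rlt_le _ _ (proj1 Hp)) (proj2 Hp))).
have -> : (p * (INR s / INR s.+1) + (1 - p)) * (INR s.+1 * npow s.+1 (p - 1)) =
  INR s.+1 * npow s.+1 (p - 1) - p * npow s.+1 (p - 1) by rewrite S_INR; field; rewrite -S_INR; lra.
have -> : npow s.+1 p = INR s.+1 * npow s.+1 (p - 1)
  by rewrite -npowS_exp // (_ : p - 1 + 1 = p); last ring.
rewrite (npow_factor s p) //; lra.
Qed.

Definition npow_sum (N : nat) (t : R) : R := \big[Rplus/0]_(0 <= k < N) npow k.+1 t.

Lemma npow_sumS N t : npow_sum N.+1 t = npow_sum N t + npow N.+1 t.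
Proof. by rewrite /npow_sum big_nat_recr. Qed.

Lemma npow_sum1 t : npow_sum 1 t = 1.
Proof. by rewrite /npow_sum big_nat1 npow1n. Qed.

Lemma npow_sum_ge_nonpos t N : t <= 0 -> INR N * npow N t <= npow_sum N t.
Proof.
move=> Ht; suff H M : (M <= N)%nat -> INR M * npow N t <= npow_sum M t by apply: H.
elim: M => [|M IH] HM; first by rewrite /npow_sum big_geq //=; lra.
rewrite npow_sumS S_INR; have := IH ltac:(lia).
by have := npow_ge_base M.+1 N t ltac:(lia) HM Ht; lra.
Qed.

Lemma npow_sum_le_nonneg t N : 0 <= t -> npow_sum N t <= INR N * npow N t.
Proof.
move=> Ht; suff H M : (M <= N)%nat -> npow_sum M t <= INR M * npow N t by apply: H.
elim: M => [|M IH] HM; first by rewrite /npow_sum big_geq //=; lra.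
rewrite npow_sumS S_INR; have := IH ltac:(lia).
by have := npow_le_base M.+1 N t ltac:(lia) HM Ht; lra.
Qed.

Lemma npow_sum_ge_nonneg t N : 0 <= t -> (0 < N)%nat ->
  npow N (t + 1) / (t + 1) <= npow_sum N t.
Proof.
move=> Ht; elim: N => [|[|N] IH] HN; first lia.
  by rewrite npow_sum1 npow1n; apply: (Rmult_le_reg_r (t + 1)); [lra | field_simplify; lra].
rewrite npow_sumS; have := IH ltac:(lia); have := npowS_sub_le (t + 1) N.+1 ltac:(lra) ltac:(lia).
rewrite (_ : t + 1 - 1 = t); last ring.
have Ht1 : 0 < t + 1 by lra.
have -> : npow N.+2 (t + 1) / (t + 1) =
  npow N.+1 (t + 1) / (t + 1) + (npow N.+2 (t + 1) - npow N.+1 (t + 1)) / (t + 1) by field; lra.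
move=> H1 H2; apply: Rplus_le_compat => //.
by apply: (Rmult_le_reg_r (t + 1)) => //; rewrite /Rdiv Rmult_assoc Rinv_l; lra.
Qed.

Lemma npow_sum_le_small p N : 0 < p <= 1 -> (0 < N)%nat -> npow_sum N (p - 1) <= npow N p / p.
Proof.
move=> Hp; elim: N => [|[|N] IH] HN; first lia.
  by rewrite npow_sum1 npow1n; apply: (Rmult_le_reg_r p); [lra | field_simplify; lra].
rewrite npow_sumS; have := IH ltac:(lia); have := npowS_sub_ge p N.+1 Hp ltac:(lia).
have -> : npow N.+2 p / p = npow N.+1 p / p + (npow N.+2 p - npow N.+1 p) / p by field; lra.
move=> H1 H2; apply: Rplus_le_compat => //.
by apply: (Rmult_le_reg_r p); [lra | rewrite /Rdiv Rmult_assoc Rinv_l; lra].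
Qed.

Lemma npow_sum_ge e : 0 < e ->
  exists c, 0 < c /\ forall N, (0 < N)%nat -> c * npow N e <= npow_sum N (e - 1).
Proof.
move=> He; have [He1|He1] := Rle_or_lt e 1.
- exists 1; split => [|N HN]; first lra.
  rewrite (_ : npow N e = INR N * npow N (e - 1)); last by rewrite -npowS_exp //; congr npow; ring.
  by have := npow_sum_ge_nonpos (e - 1) N (_ : e - 1 <= 0); lra.
- exists (/ e); split => [|N HN]; first by apply: Rinv_0_lt_compat; lra.
  have := npow_sum_ge_nonneg (e - 1) N (_ : 0 <= e - 1) HN; rewrite (_ : e - 1 + 1 = e); last ring.
  by rewrite /Rdiv Rmult_comm; apply; lra.
Qed.

Lemma npow_sum_le p : 0 < p ->
  exists K, 0 < K /\ forall N, (0 < N)%nat -> npow_sum N (p - 1) <= K * npow N p.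
Proof.
move=> Hp; have [Hp1|Hp1] := Rle_or_lt p 1.
- exists (/ p); split => [|N HN]; first by apply: Rinv_0_lt_compat; lra.
  by have := npow_sum_le_small p N (conj Hp Hp1) HN; rewrite /Rdiv Rmult_comm.
- exists 1; split => [|N HN]; first lra.
  rewrite (_ : npow N p = INR N * npow N (p - 1)); last by rewrite -npowS_exp //; congr npow; ring.
  by have := npow_sum_le_nonneg (p - 1) N (_ : 0 <= p - 1); lra.
Qed.

(** * Compactness *)

Definition extraction (phi : nat -> nat) : Prop := forall j, (phi j < phi j.+1)%nat.

Lemma extraction_ge phi : extraction phi -> forall j, (j <= phi j)%nat.
Proof. move=> H; elim=> [|j IH]; first lia. have := H j; lia. Qed.

Lemma extraction_lt phi : extraction phi -> forall a b, (a < b)%nat -> (phi a < phi b)%nat.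
Proof.
move=> H a; elim=> [|b IH] Hab; first lia.
case: (ltnP a b) => Hab'.
- have := IH Hab'; have := H b; lia.
- have -> : a = b by lia. exact: H.
Qed.

Lemma Un_cv_subseq v l phi : Un_cv v l -> extraction phi -> Un_cv (fun j => v (phi j)) l.
Proof.
move=> Hv Hp eps He; have [N HN] := Hv eps He; exists N => j Hj.
apply: HN; have := extraction_ge phi Hp j; lia.
Qed.

Lemma Un_cv_const c : Un_cv (fun _ => c) c.
Proof. move=> eps He; exists 0%nat => j _; rewrite /Rdist Rminus_diag Rabs_R0; lra. Qed.

Lemma bolzano_weierstrass_R (u : nat -> R) B : (forall k, Rabs (u k) <= B) ->
  exists phi, extraction phi /\ exists l, Un_cv (fun j => u (phi j)) l.
Proof.
move=> HB.
have HB' : forall k, (fun c => - B <= c <= B) (u k).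
  move=> k /=; have := HB k; have := Rle_abs (u k); have := Rle_abs (- u k); rewrite Rabs_Ropp; lra.
have [l Hl] := Rtopology.Bolzano_Weierstrass u _ (Rtopology.compact_P3 (- B) B) HB'.
have Hsel : forall N j, exists p, (N <= p)%nat /\ Rabs (u p - l) < / INR j.+1.
  move=> N j.
  have Hj : 0 < / INR j.+1 by apply: Rinv_0_lt_compat; apply: lt_0_INR; lia.
  have Hnb : Rtopology.neighbourhood (fun y => Rabs (y - l) < / INR j.+1) l.
    by exists (mkposreal _ Hj) => y Hy; exact: Hy.
  have [p [Hp HV]] := Hl (fun y => Rabs (y - l) < / INR j.+1) N Hnb.
  exists p; split => //; apply/leP; exact: Hp.
have sel : forall N j, {p | (N <= p)%nat /\ Rabs (u p - l) < / INR j.+1}.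
  move=> N j; apply: constructive_indefinite_description; exact: Hsel.
pose phi := fix phi j := if j is j'.+1 then sval (sel (phi j').+1 j) else sval (sel 0%nat 0%nat).
have P1 j : Rabs (u (phi j) - l) < / INR j.+1 by case: j => [|j]; exact: (proj2 (svalP (sel _ _))).
have P2 : extraction phi by move=> j; exact: (proj1 (svalP (sel _ _))).
exists phi; split => //; exists l => eps He.
have [N [HN HN0]] := archimed_cor1 eps He.
exists N => j Hj; rewrite /Rdist.
apply: Rlt_le_trans (P1 j) _.
apply: Rle_trans _ (Rlt_le _ _ HN).
apply: Rinv_le_contravar; first by apply: lt_0_INR; lia.
apply: le_INR; lia.
Qed.

Lemma Un_cv_sum0 {I} (s : seq I) (F : nat -> I -> R) :
  (forall i, Un_cv (fun j => F j i) 0) -> Un_cv (fun j => \big[Rplus/0]_(i <- s) F j i) 0.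
Proof.
move=> H; elim: s => [|a s IH].
  have := Un_cv_const 0; apply: Un_cv_ext => j; by rewrite big_nil.
have := CV_plus _ _ _ _ (H a) IH; rewrite Rplus_0_r.
by apply: Un_cv_ext => j; rewrite big_cons.
Qed.

Lemma Un_cv_sqrt0 (a : nat -> R) : (forall j, 0 <= a j) -> Un_cv a 0 -> Un_cv (fun j => sqrt (a j)) 0.
Proof.
move=> Ha H eps He; have [N HN] := H (eps * eps) ltac:(nra).
exists N => j Hj; have := HN j Hj; rewrite /Rdist !Rminus_0_r => Hj'.
rewrite Rabs_right; last by apply: Rle_ge; apply: sqrt_pos.
rewrite Rabs_right in Hj'; last by apply: Rle_ge; apply: Ha.
rewrite -(sqrt_square eps); last lra.
apply: sqrt_lt_1_alt; split => //; exact: Ha.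
Qed.

Lemma bolzano_weierstrass_Rn {n} (u : nat -> Vec n) B : (forall k, vnorm (u k) <= B) ->
  exists psi, extraction psi /\ exists y, Un_cv (fun j => vnorm (vsub (u (psi j)) y)) 0.
Proof.
move=> HB.
have first_coords_cv : forall J, (J <= n)%nat -> exists psi (y : Vec n), extraction psi /\
    forall i : 'I_n, (i < J)%nat -> Un_cv (fun j => u (psi j) i) (y i).
  elim=> [|J IH] HJ.
    by exists id, vzero; split => // j /=; lia.
  have [psi [y [Hpsi Hy]]] := IH ltac:(lia).
  have HJn : (J < n)%nat by lia.
  set i0 := Ordinal HJn.
  have [phi [Hphi [l Hl]]] := bolzano_weierstrass_R (fun j => u (psi j) i0) B
    (fun k => Rle_trans _ _ _ (coord_le_vnorm _ _) (HB _)).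
  exists (fun j => psi (phi j)), (fun i => if i == i0 then l else y i); split.
    move=> j; apply: (extraction_lt psi Hpsi); exact: Hphi.
  move=> i Hi; case: eqP => [->|Hne] //.
  have Hi' : (i < J)%nat.
    have : nat_of_ord i <> J by move=> E; apply: Hne; apply: val_inj.
    lia.
  exact: Un_cv_subseq (Hy i Hi') Hphi.
have [psi [y [Hpsi Hy]]] := first_coords_cv n (leqnn n).
exists psi; split => //; exists y.
rewrite /vnorm.
apply: Un_cv_sqrt0; first by move=> j; exact: sqnorm_ge0.
apply: Un_cv_sum0 => i.
have Hc := CV_minus _ _ _ _ (Hy i (ltn_ord i)) (Un_cv_const (y i)).
rewrite Rminus_diag in Hc.
have := CV_mult _ _ _ _ Hc Hc; rewrite Rmult_0_r.
by apply: Un_cv_ext => j; rewrite /vsub.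
Qed.

(** * One epoch of the incremental method *)

Lemma subgrad_gap_le {n} (f : Vec n -> R) x y g :
  subgrad f x g -> f x - f y <= dot (vsub x y) g.
Proof.
move=> Hg; have := Hg y.
by rewrite dotBr dotBl (dotC y g) (dotC x g); lra.
Qed.

Lemma proj_step_sqdist {n} (X : Vec n -> Prop) x g y p gam :
  convex_set X -> is_proj X (vsub x (vscale gam g)) p -> X y ->
  sqnorm (vsub p y) <= sqnorm (vsub x y) - 2 * gam * dot (vsub x y) g + gam * gam * sqnorm g.
Proof.
move=> HX Hp Xy; have := sqnorm_le_of_vnorm _ _ (proj_closer HX Hp Xy).
have -> : vsub (vsub x (vscale gam g)) y = vsub (vsub x y) (vscale gam g)
  by apply: vext => i; rewrite /vsub /vscale; ring.
by rewrite sqnorm_vsubZ.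
Qed.

Lemma proj_step_dist {n} (X : Vec n -> Prop) x g p gam :
  convex_set X -> is_proj X (vsub x (vscale gam g)) p -> X x -> 0 <= gam ->
  vnorm (vsub p x) <= gam * vnorm g.
Proof.
move=> HX Hp Xx Hgam; apply: Rle_trans (proj_closer HX Hp Xx) _.
have -> : vsub (vsub x (vscale gam g)) x = vscale (- gam) g
  by apply: vext => i; rewrite /vsub /vscale; ring.
by rewrite vnormZ Rabs_Ropp Rabs_right; lra.
Qed.

Section Epoch.
Context {n : nat} (m : nat) (X : Vec n -> Prop) (fs : nat -> Vec n -> R) (h : Vec n -> R).
Variables (gam lam L0 C Rb : R) (xs : nat -> Vec n) (xh : Vec n).
Hypotheses (m_gt0 : (0 < m)%nat) (convex_X : convex_set X)
  (bounded_X : forall v, X v -> vnorm v <= Rb) (X_x0 : X (xs 0%nat)) (X_xh : X xh)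
  (regular_fs : forall i, (i < m)%nat -> regular_on_ball (fs i) Rb C)
  (regular_h : regular_on_ball h Rb C) (C_ge0 : 0 <= C)
  (gam_gt0 : 0 < gam) (lam_gt0 : 0 < lam) (lam_le : lam <= L0).
Hypothesis inner_steps : forall i, (i < m)%nat ->
  exists gf gh, subgrad (fs i) (xs i) gf /\ subgrad h (xs i) gh /\
    is_proj X (vsub (xs i) (vscale gam (vadd gf (vscale (lam / INR m) gh)))) (xs i.+1).

(* [G] bounds the norm of every inner direction [gf + (lam/m) gh]. *)
Let G : R := C + L0 * C.
Let T (i : nat) : R := fs i (xs 0%nat) - fs i xh + lam / INR m * (h (xs 0%nat) - h xh).

Let lam_m_bounds : 0 <= lam / INR m <= L0.
Proof.
have Hm : 1 <= INR m by have := le_INR 1 m ltac:(lia); rewrite /=; lra.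
split; first by apply: Rmult_le_pos; [lra | apply: Rlt_le; apply: Rinv_0_lt_compat; lra].
apply: Rle_trans lam_le; apply: (Rmult_le_reg_r (INR m)); first lra.
by rewrite /Rdiv Rmult_assoc Rinv_l; nra.
Qed.

(* The subgradients are taken at [xs i], but the gap is measured at the epoch start [xs 0];
   the Lipschitz bound pays for the drift [d] in between. *)
Lemma inner_step i d : (i < m)%nat -> X (xs i) -> vnorm (vsub (xs i) (xs 0%nat)) <= d ->
  [/\ X (xs i.+1), vnorm (vsub (xs i.+1) (xs i)) <= gam * G &
      sqnorm (vsub (xs i.+1) xh) <=
        sqnorm (vsub (xs i) xh) - 2 * gam * T i + 2 * gam * G * d + gam * gam * (G * G)].
Proof.
move=> Hi Xi Hd.
have [gf [gh [Hgf [Hgh Hpr]]]] := inner_steps i Hi.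
set g := vadd gf (vscale (lam / INR m) gh) in Hpr.
have [Hlm0 HlmL] := lam_m_bounds.
have [Lf Sf] := regular_fs i Hi; have [Lh Sh] := regular_h.
have Hxi := bounded_X _ Xi; have Hx0 := bounded_X _ X_x0.
have Hng : vnorm g <= G.
  apply: Rle_trans (vnorm_triangle _ _) _; rewrite vnormZ Rabs_right; last lra.
  by have := Sf _ _ Hxi Hgf; have := Sh _ _ Hxi Hgh; have := vnorm_ge0 gh; rewrite /G; nra.
have Hgap : T i - G * d <= dot (vsub (xs i) xh) g.
  have Hd0 : 0 <= d by have := vnorm_ge0 (vsub (xs i) (xs 0%nat)); lra.
  have drift (phi : Vec n -> R) : lipschitz_ball phi Rb C ->
      phi (xs 0%nat) - phi (xs i) <= C * d.
    move=> Lphi; have := Lphi _ _ Hx0 Hxi; rewrite vnorm_vsubC => H.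
    by apply: Rle_trans H _; apply: Rmult_le_compat_l.
  have Ef := drift _ Lf; have Eh := drift _ Lh.
  have Gf := subgrad_gap_le _ _ xh _ Hgf; have Gh := subgrad_gap_le _ _ xh _ Hgh.
  have K1 : lam / INR m * (h (xs 0%nat) - h xh) <=
            lam / INR m * (dot (vsub (xs i) xh) gh + C * d) by apply: Rmult_le_compat_l; lra.
  have K2 : lam / INR m * (C * d) <= L0 * (C * d) by apply: Rmult_le_compat_r; nra.
  rewrite /g dotDr dotZr /T /G; lra.
split; first by case: Hpr.
- by apply: Rle_trans (proj_step_dist _ _ _ _ _ convex_X Hpr Xi (Rlt_le _ _ gam_gt0)) _; nra.
- apply: Rle_trans (proj_step_sqdist _ _ _ _ _ _ convex_X Hpr X_xh) _.
  have : sqnorm g <= G * G by rewrite -vnorm_sq; have := vnorm_ge0 g; nra.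
  nra.
Qed.

Lemma epoch_invariant i : (i <= m)%nat ->
  [/\ X (xs i), vnorm (vsub (xs i) (xs 0%nat)) <= INR i * gam * G &
      sqnorm (vsub (xs i) xh) <= sqnorm (vsub (xs 0%nat) xh)
        - 2 * gam * \big[Rplus/0]_(0 <= j < i) T j + gam * gam * (G * G) * (INR i * INR i)].
Proof.
elim: i => [|i IH] Hi.
  rewrite big_geq // (_ : vsub _ _ = vzero) ?vnorm_vzero; last first.
    by apply: vext => k; rewrite /vsub /vzero; ring.
  by split => //=; lra.
have [Xi Hdi Hsi] := IH ltac:(lia).
have [Xi1 Hstep Hsq] := inner_step i _ Hi Xi Hdi.
split => //.
- by apply: Rle_trans (vnorm_vsub_triangle _ (xs i) _) _; rewrite S_INR; lra.
- rewrite S_INR big_nat_recr //=; apply: Rle_trans Hsq _.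
  have : 0 <= INR i * ((gam * G) * (gam * G)) by apply: Rmult_le_pos; [apply: pos_INR | nra].
  lra.
Qed.

(* One pass over [f_1, ..., f_m] behaves like a single subgradient step on [f + lam h]. *)
Lemma epoch_descent :
  X (xs m) /\
  sqnorm (vsub (xs m) xh) <= sqnorm (vsub (xs 0%nat) xh)
    - 2 * gam * (fsum m fs (xs 0%nat) - fsum m fs xh + lam * (h (xs 0%nat) - h xh))
    + gam * gam * (INR m * INR m * (G * G)).
Proof.
have [Xm _ Hm] := epoch_invariant m (leqnn m); split => //.
have ET N : \big[Rplus/0]_(0 <= j < N) T j = fsum N fs (xs 0%nat) - fsum N fs xh
    + INR N * (lam / INR m * (h (xs 0%nat) - h xh)).
  elim: N => [|N IH]; first by rewrite /fsum !big_geq //=; ring.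
  by rewrite S_INR big_nat_recr //= IH !fsumS /T; ring.
have Hm0 : INR m <> 0 by apply: not_0_INR; lia.
move: Hm; rewrite ET (_ : INR m * (lam / INR m * (h (xs 0%nat) - h xh)) = lam * (h (xs 0%nat) - h xh)).
  by lra.
by field.
Qed.

End Epoch.

(** * Weighted averages along a perturbed descent recursion *)

(* Abel summation: with nondecreasing weights the sum telescopes up to the last weight. *)
Lemma weighted_telescope (c D : nat -> R) Dmax N :
  (forall k, c k <= c k.+1) -> (forall k, 0 <= c k) -> (forall k, 0 <= D k <= Dmax) ->
  \big[Rplus/0]_(0 <= k < N) (c k * (D k - D k.+1)) <= c N * Dmax.
Proof.
move=> Hc Hc0 HD.
suff H M : \big[Rplus/0]_(0 <= k < M) (c k * (D k - D k.+1)) <= c M * (Dmax - D M).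
  by apply: Rle_trans (H N) _; have := Hc0 N; have := HD N; nra.
elim: M => [|M IH]; first by rewrite big_geq //; have := Hc0 0%nat; have := HD 0%nat; nra.
by rewrite big_nat_recr //=; have := Hc M; have := HD M; have := HD M.+1; have := Hc0 M; nra.
Qed.

Lemma descent_objective_gap_le (D D' F H gam lam Cst Mh : R) :
  0 < gam -> 0 <= lam -> - Mh <= H ->
  D' <= D - 2 * gam * (F + lam * H) + gam * gam * Cst ->
  F <= (D - D') / (2 * gam) + lam * Mh + gam * Cst / 2.
Proof.
move=> Hg Hl HH Hrec; apply: (Rmult_le_reg_l (2 * gam)); first lra.
have -> : 2 * gam * ((D - D') / (2 * gam) + lam * Mh + gam * Cst / 2) =
  D - D' + 2 * gam * (lam * Mh) + gam * gam * Cst by field; lra.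
have : - (lam * H) <= lam * Mh by nra.
nra.
Qed.

Lemma descent_regularizer_gap_le (D D' F H gam lam Cst : R) :
  0 < gam -> 0 < lam -> 0 <= F ->
  D' <= D - 2 * gam * (F + lam * H) + gam * gam * Cst ->
  H <= (D - D') / (2 * gam * lam) + gam * Cst / (2 * lam).
Proof.
move=> Hg Hl HF Hrec; apply: (Rmult_le_reg_l (2 * gam * lam)); first nra.
have -> : 2 * gam * lam * ((D - D') / (2 * gam * lam) + gam * Cst / (2 * lam)) =
  D - D' + gam * gam * Cst by field; lra.
nra.
Qed.

Lemma ratio_rate (S W : nat -> R) c K1 K2 s p e t :
  0 < c -> 0 < p -> 0 <= K1 -> 0 <= K2 -> 0 <= s -> s - e <= t -> p - e <= t ->
  (forall N, (0 < N)%nat -> c * npow N e <= W N) ->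
  (forall N, (0 < N)%nat -> S N <= K1 * npow N.+1 s + K2 * npow_sum N (p - 1)) ->
  exists K, 0 <= K /\ forall N, (0 < N)%nat -> / W N * S N <= K * npow N t.
Proof.
move=> Hc Hp HK1 HK2 Hs Hst Hpt HW HS.
have [Kp [HKp Hsum]] := npow_sum_le p Hp.
set K' := K1 * Rpower 2 s + K2 * Kp.
have H2s : 0 < Rpower 2 s := exp_pos _.
have HK' : 0 <= K'.
  by have := Rmult_le_pos _ _ HK1 (Rlt_le _ _ H2s); have := Rmult_le_pos _ _ HK2 (Rlt_le _ _ HKp); rewrite /K'; lra.
exists (K' / c); split => [|N HN]; first by apply: Rmult_le_pos; [|apply: Rlt_le; apply: Rinv_0_lt_compat].
have Hs' : npow N s <= npow N (e + t) by apply: npow_le_exp => //; lra.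
have Hp' : npow N p <= npow N (e + t) by apply: npow_le_exp => //; lra.
have HSN : S N <= K' * npow N (e + t).
  apply: Rle_trans (HS N HN) _.
  have := Rmult_le_compat_l K1 _ _ HK1 (npowS_le N s HN Hs).
  have := Rmult_le_compat_l K2 _ _ HK2 (Hsum N HN).
  have := Rmult_le_compat_l (K1 * Rpower 2 s) _ _ ltac:(nra) Hs'.
  have := Rmult_le_compat_l (K2 * Kp) _ _ ltac:(nra) Hp'.
  rewrite /K'; lra.
have He := npow_gt0 N e; have Ht := npow_gt0 N t.
have HWN : 0 < W N by have := HW N HN; nra.
have HKc : 0 <= K' / c * npow N t.
  by apply: Rmult_le_pos; [apply: Rmult_le_pos; [|apply: Rlt_le; apply: Rinv_0_lt_compat] | lra].
have Hmul : S N <= K' / c * npow N t * W N.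
  apply: Rle_trans HSN _; rewrite npowD.
  have -> : K' * (npow N e * npow N t) = K' / c * npow N t * (c * npow N e) by field; lra.
  exact: Rmult_le_compat_l (HW N HN).
apply: (Rmult_le_reg_l (W N)) => //; rewrite -Rmult_assoc Rinv_r; lra.
Qed.

Lemma telescoping_avg_rate (w B D : nat -> R) Dmax c cc s K p e t :
  0 < c -> 0 <= cc -> 0 <= s -> 0 <= K -> 0 < p -> s - e <= t -> p - e <= t ->
  (forall k, 0 <= D k <= Dmax) ->
  (forall N, (0 < N)%nat -> c * npow N e <= \big[Rplus/0]_(0 <= k < N) w k) ->
  (forall k, w k * B k <= cc * npow k.+1 s * (D k - D k.+1) + K * npow k.+1 (p - 1)) ->
  exists K', 0 <= K' /\ forall N, (0 < N)%nat -> wavgR (index_iota 0 N) w B <= K' * npow N t.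
Proof.
move=> Hc Hcc Hs HK Hp Hst Hpt HD HW Hstep.
have HDm : 0 <= Dmax by have := HD 0%nat; lra.
apply: (ratio_rate _ _ c (cc * Dmax) K s p e t) => // [|N HN]; first exact: Rmult_le_pos.
apply: Rle_trans (sumR_le Hstep) _; rewrite big_split /= sumR_scale.
apply: Rplus_le_compat_r; rewrite (_ : cc * Dmax * npow N.+1 s = cc * npow N.+1 s * Dmax); last ring.
apply: (weighted_telescope (fun k => cc * npow k.+1 s)) => // k.
- by apply: Rmult_le_compat_l => //; apply: npow_le_base => //; lia.
- by apply: Rmult_le_pos => //; apply: Rlt_le; apply: npow_gt0.
Qed.

Lemma scaled_npow_lt_eventually K d eps : 0 <= K -> 0 < d -> 0 < eps ->
  exists N0, (0 < N0)%nat /\ forall N, (N0 <= N)%nat -> K * npow N (- d) < eps.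
Proof.
move=> HK Hd He.
have He' : 0 < eps / (K + 1) by apply: Rdiv_lt_0_compat; lra.
have [N0 [HN0 H]] := npow_lt_eventually d _ Hd He'.
exists N0; split => // N HN; have := H N HN; have := npow_gt0 N (- d).
have : eps / (K + 1) * (K + 1) = eps by field; lra.
nra.
Qed.

Lemma gam_seq_gt0 gam0 eps k : 0 < gam0 -> 0 < gam_seq gam0 eps k.
Proof. by move=> Hg; apply: Rdiv_lt_0_compat => //; apply: exp_pos. Qed.

Lemma lam_seq_gt0 lam0 eps k : 0 < lam0 -> 0 < lam_seq lam0 eps k.
Proof. by move=> Hl; apply: Rdiv_lt_0_compat => //; apply: exp_pos. Qed.

Lemma lam_seq_le lam0 eps k : 0 < lam0 -> eps < 1 / 2 -> lam_seq lam0 eps k <= lam0.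
Proof.
move=> Hl He; change (lam0 / npow k.+1 (1 / 2 - eps) <= lam0).
have Hp : 1 <= npow k.+1 (1 / 2 - eps) by rewrite -{1}(npow0 k.+1) //; apply: npow_le_exp => //; lra.
apply: (Rmult_le_reg_r (npow k.+1 (1 / 2 - eps))); first lra.
by rewrite /Rdiv Rmult_assoc Rinv_l; [nra | lra].
Qed.

Section StepSizes.
Variables (gam0 lam0 eps r : R).
Hypotheses (eps_bounds : 0 < eps < 1 / 2) (r_lt1 : r < 1) (gam0_gt0 : 0 < gam0) (lam0_gt0 : 0 < lam0).

(* [gam_k = gam0 / (k+1)^a], [lam_k = lam0 / (k+1)^b], and the averaging weights
   [gam_k^r = A0 / (k+1)^q] sum to order [N^e]. *)
Let a : R := 1 / 2 + eps / 2.
Let b : R := 1 / 2 - eps.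
Let q : R := a * r.
Let e : R := 1 - q.
Let A0 : R := Rpower gam0 r.

Definition weight (k : nat) : R := Rpower (gam_seq gam0 eps k) r.

Lemma weight_npow k : weight k = A0 / npow k.+1 q.
Proof.
rewrite /weight /gam_seq /Rdiv -Rpower_mult_distr //; last by apply: Rinv_0_lt_compat; apply: exp_pos.
by rewrite Rpower_inv ?Rpower_mult //; apply: exp_pos.
Qed.

Lemma weight_gt0 k : 0 < weight k.
Proof. exact: exp_pos. Qed.

Lemma weight_sum_ge : exists c, 0 < c /\
  forall N, (0 < N)%nat -> c * npow N e <= \big[Rplus/0]_(0 <= k < N) weight k.
Proof.
have He : 0 < e by rewrite /e /q /a; nra.
have [c [Hc Hs]] := npow_sum_ge e He; have HA0 : 0 < A0 := exp_pos _.
exists (A0 * c); split => [|N HN]; first nra.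
have -> : \big[Rplus/0]_(0 <= k < N) weight k = A0 * npow_sum N (e - 1).
  rewrite /npow_sum -sumR_scale; apply: eq_bigr => k _.
  by rewrite weight_npow (_ : e - 1 = - q) ?npowN //; rewrite /e; ring.
by have := Hs N HN; rewrite Rmult_assoc; apply: Rmult_le_compat_l; lra.
Qed.

Lemma weight_sum_gt0 N : (0 < N)%nat -> 0 < \big[Rplus/0]_(0 <= k < N) weight k.
Proof.
have [c [Hc Hs]] := weight_sum_ge; move=> HN.
by have := Hs N HN; have := npow_gt0 N e; nra.
Qed.

Variables (D F H : nat -> R) (Dmax Mh Cst : R).
Hypotheses (Mh_ge0 : 0 <= Mh) (Cst_ge0 : 0 <= Cst)
  (F_ge0 : forall k, 0 <= F k) (H_ge : forall k, - Mh <= H k) (D_bounds : forall k, 0 <= D k <= Dmax).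
Hypothesis descent : forall k,
  D k.+1 <= D k - 2 * gam_seq gam0 eps k * (F k + lam_seq lam0 eps k * H k)
            + gam_seq gam0 eps k * gam_seq gam0 eps k * Cst.

(* An exponent below both [eps / 2] and [e]: the regulariser gap decays like [N^-dl]. *)
Let dl : R := Rmin (eps / 2) (e / 2).

Let exponents : [/\ 0 < a - q, 0 < e, 0 < e - b, a - 1 <= - b & b <= a].
Proof.
have Ha : 0 < a by rewrite /a; lra.
have Hq : q < a by rewrite /q; have := Rmult_lt_compat_l a r 1 Ha r_lt1; lra.
by move: Ha Hq; rewrite /e /q /a /b => Ha Hq; split; lra.
Qed.

Lemma weighted_objective_gap_step k :
  weight k * F k <= A0 / (2 * gam0) * npow k.+1 (a - q) * (D k - D k.+1)
    + (A0 * lam0 * Mh + A0 * gam0 * Cst / 2) * npow k.+1 (e - b - 1).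
Proof.
have [_ _ _ _ Hba] := exponents; have HA0 : 0 < A0 := exp_pos _.
have Ha := npow_gt0 k.+1 a; have Hb := npow_gt0 k.+1 b; have Hq := npow_gt0 k.+1 q.
have Hg := descent_objective_gap_le _ _ _ _ _ _ _ _ (Rdiv_lt_0_compat _ _ gam0_gt0 Ha)
  (Rlt_le _ _ (Rdiv_lt_0_compat _ _ lam0_gt0 Hb)) (H_ge k) (descent k).
have HPab : npow k.+1 b <= npow k.+1 a by apply: npow_le_exp => //; lia.
rewrite weight_npow (npowB _ a q) (_ : e - b - 1 = 0 - (q + b)); last by rewrite /e; ring.
rewrite npowB npowD npow0 //.
set Pa := npow k.+1 a in Ha Hg HPab *; set Pb := npow k.+1 b in Hb Hg HPab *.
set Pq := npow k.+1 q in Hq *.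
apply: Rle_trans (Rmult_le_compat_l (A0 / Pq) _ _ _ Hg) _.
  by apply: Rlt_le; apply: Rdiv_lt_0_compat.
have -> : A0 / Pq * ((D k - D k.+1) / (2 * (gam0 / Pa)) + lam0 / Pb * Mh + gam0 / Pa * Cst / 2) =
  A0 / (2 * gam0) * (Pa / Pq) * (D k - D k.+1) + A0 * lam0 * Mh * (1 / (Pq * Pb))
  + A0 * gam0 * Cst / 2 * / (Pq * Pa) by rewrite /gam_seq /lam_seq; field; lra.
have Hinv : / (Pq * Pa) <= 1 / (Pq * Pb) by rewrite /Rdiv Rmult_1_l; apply: Rinv_le_contravar; nra.
have HK : 0 <= A0 * gam0 * Cst / 2.
  by have := Rmult_le_pos _ _ (Rlt_le _ _ (Rmult_lt_0_compat _ _ HA0 gam0_gt0)) Cst_ge0; lra.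
have := Rmult_le_compat_l _ _ _ HK Hinv; lra.
Qed.

Let exponents_reg : [/\ 0 < dl, 0 < e - dl, a + b - 1 <= - dl & b + dl <= a].
Proof.
have [_ He _ _ _] := exponents; have Hd1 := Rmin_l (eps / 2) (e / 2); have Hd2 := Rmin_r (eps / 2) (e / 2).
have Hdl : 0 < dl by apply: Rmin_pos; lra.
by rewrite -/dl in Hd1 Hd2; rewrite /a /b in Hd1 Hd2 *; split; lra.
Qed.

Lemma weighted_regularizer_gap_step k :
  weight k * H k <= A0 / (2 * gam0 * lam0) * npow k.+1 (a - q + b) * (D k - D k.+1)
    + A0 * gam0 * Cst / (2 * lam0) * npow k.+1 (e - dl - 1).
Proof.
have [_ _ _ Hbda] := exponents_reg; have HA0 : 0 < A0 := exp_pos _.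
have Ha := npow_gt0 k.+1 a; have Hb := npow_gt0 k.+1 b; have Hq := npow_gt0 k.+1 q.
have Hd := npow_gt0 k.+1 dl.
have Hg := descent_regularizer_gap_le _ _ _ _ _ _ _ (Rdiv_lt_0_compat _ _ gam0_gt0 Ha)
  (Rdiv_lt_0_compat _ _ lam0_gt0 Hb) (F_ge0 k) (descent k).
have Hbd : npow k.+1 b * npow k.+1 dl <= npow k.+1 a by rewrite -npowD; apply: npow_le_exp => //; lia.
rewrite weight_npow (_ : a - q + b = a + b - q); last ring.
rewrite (npowB _ (a + b) q) npowD (_ : e - dl - 1 = 0 - (q + dl)); last by rewrite /e; ring.
rewrite npowB npowD npow0 //.
set Pa := npow k.+1 a in Ha Hg Hbd *; set Pb := npow k.+1 b in Hb Hg Hbd *.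
set Pq := npow k.+1 q in Hq *; set Pd := npow k.+1 dl in Hd Hbd *.
apply: Rle_trans (Rmult_le_compat_l (A0 / Pq) _ _ _ Hg) _.
  by apply: Rlt_le; apply: Rdiv_lt_0_compat.
have -> : A0 / Pq * ((D k - D k.+1) / (2 * (gam0 / Pa) * (lam0 / Pb)) + gam0 / Pa * Cst / (2 * (lam0 / Pb))) =
  A0 / (2 * gam0 * lam0) * (Pa * Pb / Pq) * (D k - D k.+1)
  + A0 * gam0 * Cst / (2 * lam0) * (Pb / (Pq * Pa)) by field; lra.
have Hle : Pb / (Pq * Pa) <= 1 / (Pq * Pd).
  have -> : Pb / (Pq * Pa) = Pb * Pd * / (Pq * Pa * Pd) by field; lra.
  have -> : 1 / (Pq * Pd) = Pa * / (Pq * Pa * Pd) by field; lra.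
  apply: Rmult_le_compat_r => //; apply: Rlt_le; apply: Rinv_0_lt_compat.
  by apply: Rmult_lt_0_compat => //; apply: Rmult_lt_0_compat.
have HK : 0 <= A0 * gam0 * Cst / (2 * lam0).
  apply: Rmult_le_pos; last by apply: Rlt_le; apply: Rinv_0_lt_compat; lra.
  by have := Rmult_le_pos _ _ (Rlt_le _ _ (Rmult_lt_0_compat _ _ HA0 gam0_gt0)) Cst_ge0.
have := Rmult_le_compat_l _ _ _ HK Hle; lra.
Qed.

Lemma avg_objective_gap_rate :
  exists K, 0 <= K /\ forall N, (0 < N)%nat -> wavgR (index_iota 0 N) weight F <= K * npow N (- b).
Proof.
have [Haq He Heb Hab _] := exponents; have [c [Hc Hw]] := weight_sum_ge.
have HA0 : 0 < A0 := exp_pos _.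
apply: (telescoping_avg_rate _ _ _ Dmax c _ _ _ _ e _ _ _ _ _ _ _ _ D_bounds Hw weighted_objective_gap_step) => //.
- by apply: Rmult_le_pos; [lra | apply: Rlt_le; apply: Rinv_0_lt_compat; lra].
- by lra.
- have := Rmult_le_pos _ _ (Rlt_le _ _ (Rmult_lt_0_compat _ _ HA0 lam0_gt0)) Mh_ge0.
  by have := Rmult_le_pos _ _ (Rlt_le _ _ (Rmult_lt_0_compat _ _ HA0 gam0_gt0)) Cst_ge0; lra.
- by rewrite /e; lra.
- by lra.
Qed.

Lemma avg_regularizer_gap_eventually ep : 0 < ep ->
  exists N0, forall N, (N0 <= N)%nat -> wavgR (index_iota 0 N) weight H < ep.
Proof.
move=> Hep; have [Haq He _ _ _] := exponents; have [Hdl Hedl Habd _] := exponents_reg.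
have [c [Hc Hw]] := weight_sum_ge; have HA0 : 0 < A0 := exp_pos _.
have [K [HK Hrate]] : exists K, 0 <= K /\
    forall N, (0 < N)%nat -> wavgR (index_iota 0 N) weight H <= K * npow N (- dl).
  apply: (telescoping_avg_rate _ _ _ Dmax c _ _ _ _ e _ _ _ _ _ _ _ _ D_bounds Hw weighted_regularizer_gap_step) => //.
  - by apply: Rmult_le_pos; [lra | apply: Rlt_le; apply: Rinv_0_lt_compat; nra].
  - by rewrite /b; lra.
  - apply: Rmult_le_pos; last by apply: Rlt_le; apply: Rinv_0_lt_compat; lra.
    by have := Rmult_le_pos _ _ (Rlt_le _ _ (Rmult_lt_0_compat _ _ HA0 gam0_gt0)) Cst_ge0.
  - by rewrite /e; lra.
  - by lra.
have [N0 [HN0 HN]] := scaled_npow_lt_eventually K dl ep HK Hdl Hep.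
by exists N0 => N HN'; apply: Rle_lt_trans (Hrate N _) (HN N HN'); lia.
Qed.

End StepSizes.

(** * Convergence to the selected minimiser *)

Lemma not_Un_cv0_subseq (u : nat -> R) : (forall k, 0 <= u k) -> ~ Un_cv u 0 ->
  exists ep (phi : nat -> nat), 0 < ep /\ extraction phi /\ forall j, ep <= u (phi j).
Proof.
move=> Hu Hn.
have [ep [Hep Hbad]] : exists ep, 0 < ep /\ forall N, exists N', (N <= N')%nat /\ ep <= u N'.
  apply: NNPP => H1; apply: Hn => eps He; apply: NNPP => H2; apply: H1.
  exists eps; split => // N; apply: NNPP => H3; apply: H2; exists N => k Hk.
  rewrite /Rdist Rminus_0_r Rabs_right; last exact: Rle_ge (Hu k).
  by apply: Rnot_le_lt => H4; apply: H3; exists k; split => //; apply/leP.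
have sel N : {N' | (N <= N')%nat /\ ep <= u N'}.
  exact: constructive_indefinite_description.
pose phi := fix phi j := if j is j'.+1 then sval (sel (phi j').+1) else sval (sel 0%nat).
exists ep, phi; split => //; split => [j|[|j]] /=; try exact: (proj2 (svalP (sel _))).
exact: (proj1 (svalP (sel _))).
Qed.

Lemma lipschitz_limit_le {n} (f : Vec n -> R) Rb C (z : nat -> Vec n) y c :
  lipschitz_ball f Rb C -> 0 <= C -> (forall j, vnorm (z j) <= Rb) -> vnorm y <= Rb ->
  Un_cv (fun j => vnorm (vsub (z j) y)) 0 ->
  (forall d, 0 < d -> exists J, forall j, (J <= j)%nat -> f (z j) - c < d) ->
  f y <= c.
Proof.
move=> Lf HC Hz Hy Hcv Hf; apply: Rle_plus_epsilon => d Hd.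
have Hd' : 0 < d / (2 * (C + 1)) by apply: Rdiv_lt_0_compat; lra.
have [J1 HJ1] := Hcv _ Hd'; have [J2 HJ2] := Hf (d / 2) ltac:(lra).
have H1 := HJ1 (maxn J1 J2) ltac:(lia); have H2 := HJ2 (maxn J1 J2) ltac:(lia).
rewrite /Rdist Rminus_0_r Rabs_right in H1; last exact: Rle_ge (vnorm_ge0 _).
have L := Lf _ _ Hy (Hz (maxn J1 J2)); rewrite vnorm_vsubC in L.
have : C * vnorm (vsub (z (maxn J1 J2)) y) <= C * (d / (2 * (C + 1))) by apply: Rmult_le_compat_l; lra.
have : C * (d / (2 * (C + 1))) <= d / 2.
  apply: (Rmult_le_reg_r (2 * (C + 1))); first lra.
  by rewrite (_ : C * (d / (2 * (C + 1))) * (2 * (C + 1)) = C * d); [nra | field; lra].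
lra.
Qed.

(* Strong convexity of [h] along the segment [y, xh] inside the convex set of minimisers. *)
Lemma xh_unique {n} (X : Vec n -> Prop) f h mu xh y :
  convex_set X -> convex_fun f -> 0 < mu -> strongly_convex h mu ->
  is_xh X f h xh -> is_argmin X f y -> h y <= h xh -> y = xh.
Proof.
move=> HX Hf Hmu Hh [[Xxh Hmin] Hhmin] [Xy Hy] Hhy.
set p := vadd (vscale (1 / 2) y) (vscale (1 - 1 / 2) xh).
have Ap : is_argmin X f p.
  split; first by apply: HX => //; lra.
  move=> v Xv; have := Hf y xh (1 / 2) ltac:(lra); rewrite -/p; have := Hy xh Xxh; have := Hmin v Xv; lra.
have := Hhmin p Ap; have := Hh y xh (1 / 2) ltac:(lra); rewrite -/p => Hsc Hp.
have Hsq : vnorm (vsub y xh) ^ 2 <= 0 by nra.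
have Hd : vnorm (vsub y xh) = 0 by have := vnorm_ge0 (vsub y xh); nra.
by apply: vext => i; have := f_equal (fun v => v i) (vnorm_eq0 _ Hd); rewrite /vsub /vzero; lra.
Qed.

Section Convergence.
Context {n : nat} (X : Vec n -> Prop) (f h : Vec n -> R) (xb : nat -> Vec n) (xh : Vec n).
Variables (Rb C mu : R).
Hypotheses (convex_X : convex_set X) (closed_X : Defs.closed_set X)
  (bounded_X : forall v, X v -> vnorm v <= Rb) (convex_f : convex_fun f)
  (mu_gt0 : 0 < mu) (strongly_convex_h : strongly_convex h mu) (C_ge0 : 0 <= C)
  (lipschitz_f : lipschitz_ball f Rb C) (lipschitz_h : lipschitz_ball h Rb C)
  (xh_spec : is_xh X f h xh) (X_xb : forall N, (0 < N)%nat -> X (xb N)).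
Hypotheses
  (f_gap : forall ep, 0 < ep -> exists N0, forall N, (N0 <= N)%nat -> f (xb N) - f xh < ep)
  (h_gap : forall ep, 0 < ep -> exists N0, forall N, (N0 <= N)%nat -> h (xb N) - h xh < ep).

(* A subsequence bounded away from [xh] would cluster at a second minimiser of [h] over [X*]. *)
Lemma cv_to_xh : Un_cv (fun N => vnorm (vsub (xb N) xh)) 0.
Proof.
apply: NNPP => Hn.
have [ep [phi [Hep [Hphi Hfar]]]] := not_Un_cv0_subseq _ (fun N => vnorm_ge0 _) Hn.
pose z j := xb (phi j.+1).
have Xz j : X (z j) by apply: X_xb; have := extraction_ge phi Hphi j.+1; lia.
have [psi [Hpsi [y Hy]]] := bolzano_weierstrass_Rn z Rb (fun j => bounded_X _ (Xz j)).
have Xy : X y := closed_X _ y (fun j => Xz (psi j)) Hy.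
have late (g : Vec n -> R) :
    (forall ep, 0 < ep -> exists N0, forall N, (N0 <= N)%nat -> g (xb N) - g xh < ep) ->
    forall d, 0 < d -> exists J, forall j, (J <= j)%nat -> g (z (psi j)) - g xh < d.
  move=> Hg d Hd; have [N0 HN0] := Hg d Hd; exists N0 => j Hj; apply: HN0.
  by have := extraction_ge psi Hpsi j; have := extraction_ge phi Hphi (psi j).+1; lia.
have Hzb j : vnorm (z (psi j)) <= Rb by apply: bounded_X; apply: Xz.
have fy := lipschitz_limit_le f Rb C _ y (f xh) lipschitz_f C_ge0 Hzb (bounded_X _ Xy) Hy (late f f_gap).
have hy := lipschitz_limit_le h Rb C _ y (h xh) lipschitz_h C_ge0 Hzb (bounded_X _ Xy) Hy (late h h_gap).
have [[Xxh Hmin] _] := xh_spec.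
have Ay : is_argmin X f y by split => // v Xv; have := Hmin v Xv; lra.
have Eyx := xh_unique X f h mu xh y convex_X convex_f mu_gt0 strongly_convex_h xh_spec Ay hy.
have [J HJ] := Hy ep Hep; have := HJ J (le_n J); have := Hfar (psi J).+1.
rewrite /Rdist Rminus_0_r Rabs_right; last exact: Rle_ge (vnorm_ge0 _).
rewrite -Eyx /z; lra.
Qed.

End Convergence.

(** * The IR-IG method *)

Lemma regular_on_ball_uniform {n} m (gs : nat -> Vec n -> R) Rb :
  0 <= Rb -> (forall i, (i < m)%nat -> convex_fun (gs i)) ->
  exists C, 0 <= C /\ forall i, (i < m)%nat -> regular_on_ball (gs i) Rb C.
Proof.
move=> HRb; elim: m => [|m IH] Hgs; first by exists 0; split => [|i]; [lra | lia].
have [C1 [HC1 H1]] := IH (fun i Hi => Hgs i ltac:(lia)).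
have [C2 [HC2 H2]] := convex_regular_on_ball (gs m) Rb (Hgs m ltac:(lia)) HRb.
exists (Rmax C1 C2); split => [|i Hi]; first exact: Rle_trans HC1 (Rmax_l _ _).
have [Him|Him] := ltnP i m.
- exact: regular_on_ball_le HC1 (Rmax_l _ _) (H1 i Him).
- by rewrite (_ : i = m); [exact: regular_on_ball_le HC2 (Rmax_r _ _) H2 | lia].
Qed.

Section IRIG.
Context {n : nat} (m : nat) (X : Vec n -> Prop) (fs : nat -> Vec n -> R) (h : Vec n -> R).
Variables (mu_h eps r gam0 lam0 Rb C : R) (x : nat -> nat -> Vec n) (xh : Vec n).
Hypotheses (m_gt0 : (0 < m)%nat) (convex_X : convex_set X) (closed_X : Defs.closed_set X)
  (bounded_X : forall v, X v -> vnorm v <= Rb) (convex_fs : forall i, (i < m)%nat -> convex_fun (fs i))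
  (mu_h_gt0 : 0 < mu_h) (strongly_convex_h : strongly_convex h mu_h) (xh_spec : is_xh X (fsum m fs) h xh)
  (eps_bounds : 0 < eps < 1 / 2) (r_lt1 : r < 1) (gam0_gt0 : 0 < gam0) (lam0_gt0 : 0 < lam0)
  (C_ge0 : 0 <= C) (regular_fs : forall i, (i < m)%nat -> regular_on_ball (fs i) Rb C)
  (regular_h : regular_on_ball h Rb C) (regular_f : regular_on_ball (fsum m fs) Rb C)
  (run : IRIG_run m X fs h (gam_seq gam0 eps) (lam_seq lam0 eps) x).

Let f : Vec n -> R := fsum m fs.
Let dist2 (k : nat) : R := sqnorm (vsub (x k 0%nat) xh).
Let f_gap (k : nat) : R := f (x k 0%nat) - f xh.
Let h_gap (k : nat) : R := h (x k 0%nat) - h xh.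
Let w : nat -> R := weight gam0 eps r.

Let X_xh : X xh. Proof. by case: xh_spec => [[]]. Qed.

Lemma iterates_in_X k : X (x k 0%nat).
Proof.
have [X0 [Hnext Hstep]] := run; elim: k => [|k IH] //; rewrite Hnext.
case: m m_gt0 Hstep => [|m'] // _ Hstep.
by have [gf [gh [_ [_ [Hp _]]]]] := Hstep k m' (ltnSn _).
Qed.

Lemma descent_recursion k :
  dist2 k.+1 <= dist2 k - 2 * gam_seq gam0 eps k * (f_gap k + lam_seq lam0 eps k * h_gap k)
    + gam_seq gam0 eps k * gam_seq gam0 eps k * (INR m * INR m * ((C + lam0 * C) * (C + lam0 * C))).
Proof.
have [_ [Hnext Hstep]] := run.
have [_ Hd] := epoch_descent m X fs h (gam_seq gam0 eps k) (lam_seq lam0 eps k) lam0 C Rb (x k) xh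
  m_gt0 convex_X bounded_X (iterates_in_X k) X_xh regular_fs regular_h C_ge0
  (gam_seq_gt0 gam0 eps k gam0_gt0) (lam_seq_gt0 lam0 eps k lam0_gt0)
  (lam_seq_le lam0 eps k lam0_gt0 (proj2 eps_bounds)) (Hstep k).
by rewrite /dist2 Hnext.
Qed.

Lemma xbar_in_X N : (0 < N)%nat -> X (xbar (gam_seq gam0 eps) r x N).
Proof.
move=> HN; apply: (convex_set_wavg X (index_iota 0 N) w) => //.
- by move=> k; exact: Rlt_le (weight_gt0 _ _ _ _).
- exact: iterates_in_X.
- exact: weight_sum_gt0.
Qed.

Lemma xbar_gap_le (phi : Vec n -> R) N : convex_fun phi -> (0 < N)%nat ->
  phi (xbar (gam_seq gam0 eps) r x N) - phi xh <=
    wavgR (index_iota 0 N) w (fun k => phi (x k 0%nat) - phi xh).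
Proof.
move=> Hphi HN; have HW := weight_sum_gt0 gam0 eps r eps_bounds r_lt1 gam0_gt0 N HN.
rewrite -wavgR_shift //; apply: Rplus_le_compat_r.
by apply: (convex_fun_wavg phi (index_iota 0 N) w) => // k; exact: Rlt_le (weight_gt0 _ _ _ _).
Qed.

Let Dmax : R := (Rb + Rb) * (Rb + Rb).
Let Mh : R := C * (Rb + Rb).

Lemma dist2_bounds k : 0 <= dist2 k <= Dmax.
Proof.
split; first exact: sqnorm_ge0.
have := vnorm_vsub_le (x k 0%nat) xh; have := bounded_X _ X_xh; have := bounded_X _ (iterates_in_X k).
rewrite /dist2 /Dmax -vnorm_sq; have := vnorm_ge0 (vsub (x k 0%nat) xh); nra.
Qed.

Lemma f_gap_ge0 k : 0 <= f_gap k.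
Proof. by have [[_ Hmin] _] := xh_spec; have := Hmin _ (iterates_in_X k); rewrite /f_gap /f; lra. Qed.

Lemma h_gap_ge k : - Mh <= h_gap k.
Proof.
have [Lh _] := regular_h; have L := Lh xh (x k 0%nat) (bounded_X _ X_xh) (bounded_X _ (iterates_in_X k)).
have : C * vnorm (vsub xh (x k 0%nat)) <= C * (Rb + Rb).
  apply: Rmult_le_compat_l => //; have := vnorm_vsub_le xh (x k 0%nat).
  by have := bounded_X _ X_xh; have := bounded_X _ (iterates_in_X k); lra.
by rewrite /h_gap /Mh; lra.
Qed.

Let Mh_ge0 : 0 <= Mh.
Proof. by have := bounded_X _ X_xh; have := vnorm_ge0 xh; rewrite /Mh; nra. Qed.

Let Cst_ge0 : 0 <= INR m * INR m * ((C + lam0 * C) * (C + lam0 * C)).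
Proof. by apply: Rmult_le_pos; [have := pos_INR m; nra | nra]. Qed.

Lemma xbar_objective_rate : exists K, 0 <= K /\ forall N, (0 < N)%nat ->
  f (xbar (gam_seq gam0 eps) r x N) - f xh <= K * npow N (- (1 / 2 - eps)).
Proof.
have [K [HK Hrate]] := avg_objective_gap_rate gam0 lam0 eps r eps_bounds r_lt1 gam0_gt0 lam0_gt0
  dist2 f_gap h_gap Dmax Mh _ Mh_ge0 Cst_ge0 h_gap_ge dist2_bounds descent_recursion.
exists K; split => // N HN.
exact: Rle_trans (xbar_gap_le f N (convex_fsum m fs convex_fs) HN) (Hrate N HN).
Qed.

Lemma xbar_cv : Un_cv (fun N => vnorm (vsub (xbar (gam_seq gam0 eps) r x N) xh)) 0.
Proof.
have [Lf _] := regular_f; have [Lh _] := regular_h.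
apply: (cv_to_xh X f h _ xh Rb C mu_h) => //.
- exact: convex_fsum.
- exact: xbar_in_X.
- move=> ep Hep; have [K [HK Hrate]] := xbar_objective_rate.
  have [N0 [HN0 HN]] := scaled_npow_lt_eventually K (1 / 2 - eps) ep HK ltac:(lra) Hep.
  by exists N0 => N HN'; apply: Rle_lt_trans (Hrate N _) (HN N HN'); lia.
- move=> ep Hep; have [N0 HN] := avg_regularizer_gap_eventually gam0 lam0 eps r eps_bounds r_lt1 gam0_gt0 lam0_gt0
    dist2 f_gap h_gap Dmax _ Cst_ge0 f_gap_ge0 dist2_bounds descent_recursion ep Hep.
  exists N0.+1 => N HN'; apply: Rle_lt_trans (HN N _); last lia.
  by apply: xbar_gap_le; [apply: strongly_convex_convex mu_h_gt0 strongly_convex_h | lia].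
Qed.

Lemma IRIG_rates :
  Un_cv (fun N => vnorm (vsub (xbar (gam_seq gam0 eps) r x N) xh)) 0 /\
  exists K N0, forall N, (N0 <= N)%nat ->
    Rabs (f (xbar (gam_seq gam0 eps) r x N) - f xh) <= K / Rpower (INR N) (1 / 2 - eps).
Proof.
split; first exact: xbar_cv.
have [K [HK Hrate]] := xbar_objective_rate; exists K, 1%nat => N HN.
have [[_ Hmin] _] := xh_spec; have := Hmin _ (xbar_in_X N HN) => Hge.
rewrite Rabs_right; last by rewrite /f; lra.
by have := Hrate N HN; rewrite npowN.
Qed.

End IRIG.

Lemma regular_on_ball_all {n} m (fs : nat -> Vec n -> R) (h : Vec n -> R) mu Rb :
  0 <= Rb -> (forall i, (i < m)%nat -> convex_fun (fs i)) -> 0 < mu -> strongly_convex h mu ->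
  exists C, [/\ 0 <= C, forall i, (i < m)%nat -> regular_on_ball (fs i) Rb C,
    regular_on_ball h Rb C & regular_on_ball (fsum m fs) Rb C].
Proof.
move=> HRb Hfs Hmu Hh.
have [C1 [HC1 R1]] := regular_on_ball_uniform m fs Rb HRb Hfs.
have [C2 [HC2 R2]] := convex_regular_on_ball h Rb (strongly_convex_convex h mu Hmu Hh) HRb.
have [C3 [HC3 R3]] := convex_regular_on_ball (fsum m fs) Rb (convex_fsum m fs Hfs) HRb.
have M1 := Rmax_l C1 (Rmax C2 C3); have M2 := Rmax_l C2 C3; have M3 := Rmax_r C2 C3.
have M23 := Rmax_r C1 (Rmax C2 C3).
exists (Rmax C1 (Rmax C2 C3)); split; first lra.
- by move=> i Hi; apply: regular_on_ball_le _ _ _ _ HC1 M1 (R1 i Hi).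
- by apply: regular_on_ball_le _ _ _ _ HC2 _ R2; lra.
- by apply: regular_on_ball_le _ _ _ _ HC3 _ R3; lra.
Qed.

Theorem theorem2 (n m : nat) (X : Vec n -> Prop) (fs : nat -> Vec n -> R)
  (h : Vec n -> R) (mu_h : R) (eps r gam0 lam0 : R)
  (x : nat -> nat -> Vec n) (xh : Vec n) :
  (exists x0, X x0) -> convex_set X -> compact_set X ->
  (forall i, (i < m)%nat -> convex_fun (fs i)) ->
  0 < mu_h -> strongly_convex h mu_h ->
  is_xh X (fsum m fs) h xh ->
  0 < eps < (1 / 2) -> r < 1 ->
  0 < gam0 -> 0 < lam0 -> gam0 * lam0 * mu_h <= 2 * INR m ->
  IRIG_run m X fs h (gam_seq gam0 eps) (lam_seq lam0 eps) x ->
  Un_cv (fun N => vnorm (vsub (xbar (gam_seq gam0 eps) r x N) xh)) 0 /\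
  (exists C : R, exists N0 : nat, forall N : nat, (N0 <= N)%nat ->
     Rabs (fsum m fs (xbar (gam_seq gam0 eps) r x N) - fsum m fs xh)
       <= C / Rpower (INR N) ((1 / 2) - eps)).
Proof.
move=> _ HX [Hcl [M HM]] Hfs Hmu Hh Hxh Heps Hr Hg0 Hl0 Hm Hrun.
have m_gt0 : (0 < m)%nat.
  case: m Hm {Hfs Hxh Hrun} => [|m'] //= Hm.
  by have := Rmult_lt_0_compat _ _ (Rmult_lt_0_compat _ _ Hg0 Hl0) Hmu; lra.
have HXb v : X v -> vnorm v <= Rmax M 0 by move=> Xv; apply: Rle_trans (HM v Xv) (Rmax_l _ _).
have [C [HC Rfs Rh Rf]] := regular_on_ball_all m fs h mu_h (Rmax M 0) (Rmax_r _ _) Hfs Hmu Hh.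
exact: (IRIG_rates m X fs h mu_h eps r gam0 lam0 (Rmax M 0) C x xh m_gt0 HX Hcl HXb Hfs Hmu Hh Hxh
  Heps Hr Hg0 Hl0 HC Rfs Rh Rf Hrun).
Qed.
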